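(* Let $k, n$ be integers with $2 \le k \le n$ and let $\xi$ be a transcendental real number. Then $$\lambda_n (\xi) \ge \frac{w_k^{\rm lead} (\xi) - n + k}{(k-1) w_k^{\rm lead} (\xi) + n}.$$ Furthermore, this inequality remains true with $w_k^{\rm lead}(\xi)$ replaced by $w_k(\xi)$ when $k=2$ or when $n = k+1$.
   Context: For an integer $n \ge 1$ and a real number $\xi$, $\lambda_n(\xi)$ denotes the supremum (possibly $+\infty$) of the real numbers $\lambda$ such that, for arbitrarily large real numbers $X$, the inequalities $0 < |x_0| \le X$, $\max_{1 \le m \le n} |x_0 \xi^m - x_m| \le X^{-\lambda}$ have a solution in integers $x_0, \ldots, x_n$. For an integer $k\ge1$, $w_k(\xi)$ denotes the supremum of the real numbers $w$ such that, for arbitrarily large real numbers $X$, the inequalities $0 < |x_k \xi^k + \cdots + x_1\xi + x_0| \le X^{-w}$, $\max_{0\le j\le k}|x_j| \le X$ have a solution in integers $x_0,\ldots,x_k$; $w_k^{\rm lead}(\xi)$ is defined in the same way but with the additional requirement that $|x_k| \ge |x_j|$ for all $0 \le j \le k-1$. When the relevant exponent $w$ is $+\infty$, the right-hand side $\frac{w-n+k}{(k-1)w+n}$ is interpreted as its limit $1/(k-1)$. *)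

From Stdlib Require Import Reals ZArith.
From Coquelicot Require Import Coquelicot.
Open Scope R_scope.

Definition transcendental (xi : R) : Prop :=
  forall (d : nat) (c : nat -> Z),
    (exists i : nat, (i <= d)%nat /\ c i <> 0%Z) ->
    sum_f_R0 (fun i => IZR (c i) * xi ^ i) d <> 0.

Definition lambda_set (n : nat) (xi : R) (lam : R) : Prop :=
  forall X0 : R, exists X : R, X0 <= X /\
    exists x : nat -> Z,
      0 < Rabs (IZR (x 0%nat)) /\ Rabs (IZR (x 0%nat)) <= X /\
      forall m : nat, (1 <= m <= n)%nat ->
        Rabs (IZR (x 0%nat) * xi ^ m - IZR (x m)) <= Rpower X (- lam).

Definition lambda_exp (n : nat) (xi : R) : Rbar := Lub_Rbar (lambda_set n xi).

Definition w_set (lead : bool) (k : nat) (xi : R) (w : R) : Prop :=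
  forall X0 : R, exists X : R, X0 <= X /\
    exists x : nat -> Z,
      0 < Rabs (sum_f_R0 (fun j => IZR (x j) * xi ^ j) k) /\
      Rabs (sum_f_R0 (fun j => IZR (x j) * xi ^ j) k) <= Rpower X (- w) /\
      (forall j : nat, (j <= k)%nat -> Rabs (IZR (x j)) <= X) /\
      (lead = true -> forall j : nat, (j < k)%nat -> Rabs (IZR (x j)) <= Rabs (IZR (x k))).

Definition w_exp (k : nat) (xi : R) : Rbar := Lub_Rbar (w_set false k xi).
Definition w_lead_exp (k : nat) (xi : R) : Rbar := Lub_Rbar (w_set true k xi).

(* The right-hand side (w - n + k) / ((k-1) w + n), interpreted as its limit
   1/(k-1) when w is infinite. *)
Definition rhs (k n : nat) (w : Rbar) : Rbar :=
  match w with
  | Finite w => Finite ((w - INR n + INR k) / ((INR k - 1) * w + INR n))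
  | _ => Finite (1 / (INR k - 1))
  end.

(* Let P = a_0 + ... + a_k X^k be an integer polynomial of height about X with
   0 < |P(xi)| <= X^-w. Dirichlet's box principle, applied to the points
   (t, floor (t xi), ..., floor (t xi^n)), 0 <= t <= T, sorted by the values of the integer
   forms sum_i a_i floor (t xi^(i+j)), j <= n - k, and by the fractional parts of t xi^m for m
   in a set F of at most k - 1 indices, yields an integer point x whose errors
   e_m = x_m - x_0 xi^m are small on F and satisfy the recurrence
   sum_i a_i e_(i+j) = - x_0 xi^j P(xi). When this recurrence determines all the e_m from
   those on F with a controlled loss, all errors are small, and choosing the box sizes as
   suitable powers of X gives lambda_n(xi) >= (w - n + k) / ((k - 1) w + n).
   The recurrence is stable when the leading coefficient dominates, with F = {1, ..., k - 1}.
   For arbitrary P it is stable when n = k + 1, by Cramer's rule on two consecutive rows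
   around a coefficient a_p with |a_(p-1) a_(p+1)| <= a_p^2 / 4, and when k = 2, by comparing
   the three coefficients; a dominant constant term is handled by passing to the reversed
   polynomial and 1/xi. *)

From Stdlib Require Import Reals ZArith Lia Lra Psatz Classical List.
From Coquelicot Require Import Coquelicot.
Open Scope R_scope.

(** * Pigeonhole principle *)

Lemma pigeonhole_nat (T : nat) (g : nat -> nat) :
  (forall t, (t <= T)%nat -> (g t < T)%nat) ->
  exists t1 t2, (t1 < t2 <= T)%nat /\ g t1 = g t2.
Proof.
  intros Hg. apply NNPP. intros Hno.
  assert (Hinj : ForallPairs (fun x y => g x = g y -> x = y) (seq 0 (S T))).
  { intros x y Hx Hy E. apply in_seq in Hx, Hy.
    destruct (Nat.lt_trichotomy x y) as [Hl|[Hl|Hl]]; [| exact Hl |]; exfalso; apply Hno.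
    - exists x, y. split; [lia | exact E].
    - exists y, x. split; [lia | auto]. }
  assert (Hincl : incl (map g (seq 0 (S T))) (seq 0 T)).
  { intros v Hv. apply in_map_iff in Hv as [t [<- Ht]]. apply in_seq in Ht.
    apply in_seq. specialize (Hg t ltac:(lia)). lia. }
  pose proof (NoDup_incl_length (NoDup_map_NoDup_ForallPairs g Hinj (seq_NoDup _ _)) Hincl) as Hlen.
  rewrite length_map, !length_seq in Hlen. lia.
Qed.

Fixpoint radix_prod (b : nat -> nat) (L : nat) : nat :=
  match L with O => 1%nat | S L' => (b L' * radix_prod b L')%nat end.

Fixpoint radix_code (b f : nat -> nat) (L : nat) : nat :=
  match L with O => 0%nat | S L' => (f L' + b L' * radix_code b f L')%nat end.

Lemma radix_code_lt b f L :
  (forall i, (i < L)%nat -> (f i < b i)%nat) -> (radix_code b f L < radix_prod b L)%nat.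
Proof.
  induction L as [|L IH]; intros H; simpl; [lia|].
  pose proof (IH (fun i Hi => H i ltac:(lia))). pose proof (H L ltac:(lia)). nia.
Qed.

Lemma radix_code_inj b f g L :
  (forall i, (i < L)%nat -> (f i < b i)%nat /\ (g i < b i)%nat) ->
  radix_code b f L = radix_code b g L -> forall i, (i < L)%nat -> f i = g i.
Proof.
  induction L as [|L IH]; intros H E i Hi; [lia|]. simpl in E.
  destruct (H L ltac:(lia)) as [H1 H2].
  destruct (Nat.div_mod_unique (b L) (radix_code b f L) (radix_code b g L) _ _ H1 H2 ltac:(lia)) as [Eq Er].
  destruct (Nat.eq_dec i L) as [->|Hne]; [exact Er|].
  apply IH; [intros j Hj; apply H; lia | exact Eq | lia].
Qed.

Lemma pigeonhole_digits (L T : nat) (b : nat -> nat) (f : nat -> nat -> nat) :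
  (radix_prod b L <= T)%nat ->
  (forall t i, (t <= T)%nat -> (i < L)%nat -> (f t i < b i)%nat) ->
  exists t1 t2, (t1 < t2 <= T)%nat /\ forall i, (i < L)%nat -> f t1 i = f t2 i.
Proof.
  intros HT Hf.
  destruct (pigeonhole_nat T (fun t => radix_code b (f t) L)) as [t1 [t2 [Ht E]]].
  { intros t Ht. pose proof (radix_code_lt b (f t) L (fun i Hi => Hf t i Ht Hi)). lia. }
  exists t1, t2. split; [exact Ht|].
  apply (radix_code_inj b (f t1) (f t2) L); [|exact E].
  intros i Hi; split; apply Hf; lia.
Qed.

Lemma radix_prod_ext b b' L :
  (forall i, (i < L)%nat -> b i = b' i) -> radix_prod b L = radix_prod b' L.
Proof.
  induction L; intros H; simpl; [reflexivity|].
  rewrite H by lia. rewrite IHL; [reflexivity|]. intros; apply H; lia.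
Qed.

Lemma radix_prod_const K L : radix_prod (fun _ => K) L = (K ^ L)%nat.
Proof. induction L; simpl; [reflexivity|]. rewrite IHL. reflexivity. Qed.

Lemma radix_prod_two_blocks f N K V :
  radix_prod (fun i => if Nat.ltb i f then K else V) (f + N) = (K ^ f * V ^ N)%nat.
Proof.
  induction N as [|N IH].
  - rewrite Nat.add_0_r, Nat.mul_1_r, <- radix_prod_const.
    apply radix_prod_ext. intros i Hi. apply Nat.ltb_lt in Hi. rewrite Hi. reflexivity.
  - rewrite Nat.add_succ_r. simpl. rewrite IH.
    replace (Nat.ltb (f + N) f) with false by (symmetry; apply Nat.ltb_ge; lia). lia.
Qed.

(** * Integer polynomials and simultaneous approximations *)

Definition pow_bound (xi : R) (n : nat) : R := Rmax 1 (Rabs xi) ^ n.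

Lemma pow_bound_ge_1 xi n : 1 <= pow_bound xi n.
Proof. apply pow_R1_Rle, Rmax_l. Qed.

Lemma Rabs_pow_le_pow_bound xi n j : (j <= n)%nat -> Rabs (xi ^ j) <= pow_bound xi n.
Proof.
  intros Hj. unfold pow_bound. rewrite <- RPow_abs.
  apply Rle_trans with (Rmax 1 (Rabs xi) ^ j).
  - apply pow_incr. split; [apply Rabs_pos | apply Rmax_r].
  - apply Rle_pow; [apply Rmax_l | exact Hj].
Qed.

Lemma Int_part_nonneg r : 0 <= r -> (0 <= Int_part r)%Z.
Proof.
  intros Hr. destruct (base_Int_part r) as [_ H].
  assert (H1 : -1 < IZR (Int_part r)) by lra. apply lt_IZR in H1. lia.
Qed.

Lemma Int_part_lt_IZR r (K : Z) : r < IZR K -> (Int_part r < K)%Z.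
Proof. intros Hr. destruct (base_Int_part r). apply lt_IZR. lra. Qed.

Lemma Int_part_eq_dist_lt_1 r1 r2 : Int_part r1 = Int_part r2 -> Rabs (r1 - r2) < 1.
Proof.
  intros E. destruct (base_Int_part r1); destruct (base_Int_part r2).
  rewrite E in *. apply Rabs_def1; lra.
Qed.

Lemma sum_f_R0_le_const (g : nat -> R) (c : R) k :
  (forall i, (i <= k)%nat -> g i <= c) -> sum_f_R0 g k <= c * INR (S k).
Proof. intros H. rewrite <- sum_cte. apply sum_Rle. intros; apply H; lia. Qed.

Fixpoint zsum (g : nat -> Z) (k : nat) : Z :=
  match k with O => g O | S k' => (zsum g k' + g (S k'))%Z end.

Lemma zsum_IZR g k : IZR (zsum g k) = sum_f_R0 (fun i => IZR (g i)) k.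
Proof. induction k; simpl; [reflexivity|]. rewrite plus_IZR, IHk. reflexivity. Qed.

Lemma INR_Zabs_nat z : INR (Z.abs_nat z) = Rabs (IZR z).
Proof. rewrite INR_IZR_INZ, Nat2Z.inj_abs_nat, abs_IZR. reflexivity. Qed.

Lemma Rabs_IZR_ge_1 z : z <> 0%Z -> 1 <= Rabs (IZR z).
Proof. intros Hz. rewrite <- abs_IZR. apply (IZR_le 1). lia. Qed.

Lemma Rpower_pos x y : 0 < Rpower x y.
Proof. apply exp_pos. Qed.

Lemma Rpower_pow_INR x b m : 0 < x -> Rpower x b ^ m = Rpower x (b * INR m).
Proof. intros Hx. rewrite <- Rpower_pow by apply Rpower_pos. rewrite Rpower_mult. reflexivity. Qed.

Lemma le_Rpower_of_root_le c g X :
  0 < g -> 1 <= X -> Rpower (Rmax c 1) (/ g) <= X -> c <= Rpower X g.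
Proof.
  intros Hg HX HM.
  apply Rle_trans with (Rmax c 1); [apply Rmax_l|].
  apply Rle_trans with (Rpower (Rpower (Rmax c 1) (/ g)) g).
  - pose proof (Rmax_r c 1).
    rewrite Rpower_mult, Rinv_l, Rpower_1 by lra. lra.
  - apply Rle_Rpower_l; [lra | split; [apply Rpower_pos | exact HM]].
Qed.

Definition zpoly (a : nat -> Z) (k : nat) (x : R) : R := sum_f_R0 (fun i => IZR (a i) * x ^ i) k.

Lemma zpoly_coef_neq_0 a k x : zpoly a k x <> 0 -> exists i, (i <= k)%nat /\ a i <> 0%Z.
Proof.
  intros Hp. apply NNPP. intros Hno. apply Hp. unfold zpoly.
  rewrite (sum_eq _ (fun _ => 0)), sum_cte; [ring|].
  intros i Hi. replace (a i) with 0%Z; [ring|].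
  apply NNPP. intros Hne. apply Hno. exists i. split; [exact Hi | congruence].
Qed.

Lemma zpoly_rev a k xi : xi <> 0 ->
  zpoly (fun i => a (k - i)%nat) k (/ xi) = (/ xi) ^ k * zpoly a k xi.
Proof.
  intros Hxi. unfold zpoly. rewrite <- (sum_f_R0_skip (fun i => IZR (a (k - i)%nat) * (/ xi) ^ i)).
  rewrite scal_sum. apply sum_eq. intros i Hi.
  replace (k - (k - i))%nat with i by lia.
  replace ((/ xi) ^ k) with ((/ xi) ^ (k - i) * (/ xi) ^ i) by (rewrite <- pow_add; f_equal; lia).
  replace ((/ xi) ^ i) with (/ xi ^ i) by (rewrite pow_inv; reflexivity).
  field. apply pow_nonzero. exact Hxi.
Qed.

Lemma transcendental_neq_0 xi : transcendental xi -> xi <> 0.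
Proof.
  intros Ht E. apply (Ht 1%nat (fun i => if Nat.eqb i 1 then 1%Z else 0%Z)).
  - exists 1%nat. split; [lia | discriminate].
  - simpl. rewrite E. ring.
Qed.

Definition has_approx (xi : R) (n : nat) (eps Y : R) : Prop := exists x : nat -> Z,
  0 < Rabs (IZR (x 0%nat)) /\ Rabs (IZR (x 0%nat)) <= Y /\
  forall m, (1 <= m <= n)%nat -> Rabs (IZR (x 0%nat) * xi ^ m - IZR (x m)) <= eps.

Lemma has_approx_mono xi n eps eps' Y Y' :
  eps <= eps' -> Y <= Y' -> has_approx xi n eps Y -> has_approx xi n eps' Y'.
Proof.
  intros He HY [x [H1 [H2 H3]]]. exists x. split; [exact H1 | split; [lra|]].
  intros m Hm. specialize (H3 m Hm). lra.
Qed.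

Lemma reversal_error_identity (xi : R) (x : nat -> Z) n m :
  xi <> 0 -> (m <= n)%nat ->
  let ee j := IZR (x 0%nat) * (/ xi) ^ j - IZR (x j) in
  IZR (x n) * xi ^ m - IZR (x (n - m)%nat) = ee (n - m)%nat - ee n * xi ^ m.
Proof.
  intros Hxi Hm ee. unfold ee.
  assert (Hp : (/ xi) ^ n * xi ^ m = (/ xi) ^ (n - m)).
  { replace n with ((n - m) + m)%nat at 1 by lia.
    rewrite pow_add, Rmult_assoc, <- Rpow_mult_distr, Rinv_l, pow1 by exact Hxi. ring. }
  rewrite <- Hp. ring.
Qed.

Lemma near_multiple_bounds (u v t eps Y b : R) :
  1 <= Rabs u <= Y -> Rabs (u * t - v) <= eps -> eps <= Rabs t / 2 -> 0 < Rabs t <= b ->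
  0 < Rabs v /\ Rabs v <= 2 * b * Y.
Proof.
  intros [Hu HuY] Huv He [Ht Htb].
  replace v with (u * t - (u * t - v)) by ring.
  pose proof (Rabs_pos (u * t - v)). split.
  - pose proof (Rabs_triang_inv (u * t) (u * t - v)) as Htr. rewrite Rabs_mult in Htr. nra.
  - eapply Rle_trans; [apply Rabs_triang|]. rewrite Rabs_Ropp, Rabs_mult. nra.
Qed.

(* Reading an approximation of 1/xi backwards gives one of xi; the condition on [eps]
   keeps the new denominator x_n away from 0. *)
Lemma has_approx_inv xi n : xi <> 0 -> (1 <= n)%nat ->
  exists c, 1 <= c /\ forall eps Y, eps <= Rabs (/ xi) ^ n / 2 ->
    has_approx (/ xi) n eps Y -> has_approx xi n (c * eps) (c * Y).
Proof.
  intros Hxi Hn. set (et := / xi).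
  assert (Het : 0 < Rabs (et ^ n)) by (apply Rabs_pos_lt, pow_nonzero, Rinv_neq_0_compat, Hxi).
  pose proof (Rmax_l 1 (Rmax (2 * pow_bound et n) (pow_bound xi n + 1))) as Hc1.
  pose proof (Rmax_r 1 (Rmax (2 * pow_bound et n) (pow_bound xi n + 1))).
  pose proof (Rmax_l (2 * pow_bound et n) (pow_bound xi n + 1)).
  pose proof (Rmax_r (2 * pow_bound et n) (pow_bound xi n + 1)).
  set (c := Rmax 1 (Rmax (2 * pow_bound et n) (pow_bound xi n + 1))) in *.
  exists c. split; [exact Hc1|]. intros eps Y Heps [x [Hx1 [Hx2 Hx3]]].
  rewrite RPow_abs in Heps.
  assert (Hx01 : 1 <= Rabs (IZR (x 0%nat))).
  { apply Rabs_IZR_ge_1. intros E. rewrite E, Rabs_R0 in Hx1. lra. }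
  destruct (near_multiple_bounds (IZR (x 0%nat)) (IZR (x n)) (et ^ n) eps Y (pow_bound et n))
    as [Hxn1 Hxn2]; [lra | apply Hx3; lia | exact Heps | split; [exact Het | apply Rabs_pow_le_pow_bound; lia]|].
  set (ee := fun j => IZR (x 0%nat) * et ^ j - IZR (x j)).
  assert (Hee : forall j, (j <= n)%nat -> Rabs (ee j) <= eps).
  { intros j Hj. unfold ee. destruct (Nat.eq_dec j 0) as [->|Hj0].
    - simpl. replace (IZR (x 0%nat) * 1 - IZR (x 0%nat)) with 0 by ring.
      rewrite Rabs_R0. eapply Rle_trans; [apply Rabs_pos | apply (Hx3 n); lia].
    - apply Hx3. lia. }
  exists (fun m => x (n - m)%nat). rewrite Nat.sub_0_r. split; [exact Hxn1 | split].
  - pose proof (pow_bound_ge_1 et n). nra.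
  - intros m Hm. rewrite (reversal_error_identity xi x n m Hxi ltac:(lia)).
    change (Rabs (ee (n - m)%nat - ee n * xi ^ m) <= c * eps).
    eapply Rle_trans; [apply Rabs_triang|]. rewrite Rabs_Ropp, Rabs_mult.
    assert (Rabs (xi ^ m) <= pow_bound xi n) by (apply Rabs_pow_le_pow_bound; lia).
    assert (Hem := Hee (n - m)%nat ltac:(lia)). assert (Hen := Hee n (le_n n)).
    assert (Rabs (ee n) * Rabs (xi ^ m) <= eps * pow_bound xi n)
      by (apply Rmult_le_compat; try apply Rabs_pos; lra).
    assert ((pow_bound xi n + 1) * eps <= c * eps) by (apply Rmult_le_compat_r; pose proof (Rabs_pos (ee n)); lra).
    nra.
Qed.

(** * The box principle *)

(* [e m] stands for the error [x_m - s xi^m] of an integer point [(s, x_1, ..., x_n)] all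
   of whose integer forms [sum_i a_i x_(i+j)], [j <= n - k], vanish. *)
Definition stable_recurrence (xi : R) (n k : nat) (a : nat -> Z) (F : list nat) (H : nat) (C : R) :=
  forall (e : nat -> R) (s eta : R),
  e 0%nat = 0 -> 0 <= eta ->
  (forall j, (j <= n - k)%nat ->
     sum_f_R0 (fun i => IZR (a i) * e (i + j)%nat) k = - (s * xi ^ j * zpoly a k xi)) ->
  (forall m, In m F -> Rabs (e m) <= eta) ->
  forall m, (1 <= m <= n)%nat -> Rabs (e m) <= C * (eta + Rabs s * Rabs (zpoly a k xi) / INR H).

Section Box_principle.

Variables (xi : R) (n k : nat) (a : nat -> Z) (H B : nat) (F : list nat) (C : R) (K : nat).
Hypotheses (HH : (1 <= H)%nat) (HB : (1 <= B)%nat) (HC : 0 <= C)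
  (HK : (1 <= K)%nat) (Ha : forall i, (i <= k)%nat -> Rabs (IZR (a i)) <= INR (B * H))
  (Hstable : stable_recurrence xi n k a F H C).

Let u (t m : nat) : Z := if Nat.eqb m 0 then Z.of_nat t else Int_part (INR t * xi ^ m).
Let e (t m : nat) : R := IZR (u t m) - INR t * xi ^ m.
Let z (t j : nat) : Z := zsum (fun i => (a i * u t (i + j))%Z) k.

Lemma floor_error_0 t : e t 0 = 0.
Proof. unfold e, u. simpl. rewrite <- INR_IZR_INZ. ring. Qed.

Lemma floor_error_bounds t m : -1 < e t m <= 0.
Proof.
  unfold e, u. destruct (Nat.eqb_spec m 0) as [->|Hm].
  - simpl. rewrite <- INR_IZR_INZ. lra.
  - destruct (base_Int_part (INR t * xi ^ m)). lra.
Qed.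

Lemma form_value t j :
  IZR (z t j) = sum_f_R0 (fun i => IZR (a i) * e t (i + j)%nat) k + INR t * xi ^ j * zpoly a k xi.
Proof.
  unfold z. rewrite zsum_IZR. unfold zpoly.
  rewrite (sum_eq _ (fun i => IZR (a i) * e t (i + j)%nat + IZR (a i) * xi ^ i * (INR t * xi ^ j))).
  - rewrite sum_plus, scal_sum. ring.
  - intros i _. rewrite mult_IZR. unfold e. rewrite pow_add. ring.
Qed.

Lemma form_bound t j :
  INR t * pow_bound xi n * Rabs (zpoly a k xi) <= INR H -> (j <= n - k)%nat ->
  (Z.abs (z t j) <= Z.of_nat ((k + 2) * B * H))%Z.
Proof.
  intros Ht Hj. apply le_IZR. rewrite abs_IZR, <- INR_IZR_INZ, form_value.
  eapply Rle_trans; [apply Rabs_triang|].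
  assert (H1 : Rabs (sum_f_R0 (fun i => IZR (a i) * e t (i + j)%nat) k) <= INR (B * H) * INR (S k)).
  { eapply Rle_trans; [apply sum_f_R0_triangle|]. apply sum_f_R0_le_const. intros i Hi.
    rewrite Rabs_mult. destruct (floor_error_bounds t (i + j)).
    assert (Rabs (e t (i + j)%nat) <= 1) by (apply Rabs_le; lra).
    pose proof (Rabs_pos (IZR (a i))). specialize (Ha i Hi). nra. }
  assert (H2 : Rabs (INR t * xi ^ j * zpoly a k xi) <= INR H).
  { rewrite !Rabs_mult, (Rabs_right (INR t)) by (apply Rle_ge, pos_INR).
    assert (Rabs (xi ^ j) <= pow_bound xi n) by (apply Rabs_pow_le_pow_bound; lia).
    pose proof (pos_INR t). pose proof (Rabs_pos (zpoly a k xi)). pose proof (Rabs_pos (xi ^ j)).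
    eapply Rle_trans; [|exact Ht].
    replace (INR t * Rabs (xi ^ j) * Rabs (zpoly a k xi)) with (INR t * Rabs (zpoly a k xi) * Rabs (xi ^ j)) by ring.
    replace (INR t * pow_bound xi n * Rabs (zpoly a k xi)) with (INR t * Rabs (zpoly a k xi) * pow_bound xi n) by ring.
    apply Rmult_le_compat_l; [apply Rmult_le_pos|]; assumption. }
  assert (INR (B * H) * INR (S k) + INR H <= INR ((k + 2) * B * H)).
  { rewrite !mult_INR, !plus_INR, S_INR. simpl.
    assert (1 <= INR B) by (apply (le_INR 1); lia). assert (1 <= INR H) by (apply (le_INR 1); lia).
    pose proof (pos_INR k). nra. }
  lra.
Qed.

Let f := length F.
Let V := ((k + 2) * B * H)%nat.
Let T := (K ^ f * (2 * (k + 2) * B * H + 1) ^ (n - k + 1))%nat.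

(* The box of [t]: the first [f] digits locate [K e_t(m)], [m] in [F], in a unit interval;
   the last [n - k + 1] digits are the (shifted) values of the integer forms [z t j]. *)
Let digit t i := if Nat.ltb i f then Z.to_nat (Int_part (- INR K * e t (nth i F 0%nat)))
                 else Z.to_nat (z t (i - f)%nat + Z.of_nat V).
Let radix (i : nat) := if Nat.ltb i f then K else (2 * V + 1)%nat.

Hypothesis HT : INR T * pow_bound xi n * Rabs (zpoly a k xi) <= INR H.

Lemma form_bound_box t j : (t <= T)%nat -> (j <= n - k)%nat -> (Z.abs (z t j) <= Z.of_nat V)%Z.
Proof.
  intros Ht Hj. apply form_bound; [|exact Hj]. eapply Rle_trans; [|exact HT].
  apply Rmult_le_compat_r; [apply Rabs_pos|]. apply Rmult_le_compat_r.
  - pose proof (pow_bound_ge_1 xi n). lra.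
  - apply le_INR. exact Ht.
Qed.

Lemma digit_lt_radix t i : (t <= T)%nat -> (i < f + (n - k + 1))%nat -> (digit t i < radix i)%nat.
Proof.
  intros Ht Hi. unfold digit, radix. destruct (Nat.ltb_spec i f) as [Hif|Hif].
  - assert (HKpos : 0 < INR K) by (apply (lt_INR 0); lia).
    destruct (floor_error_bounds t (nth i F 0%nat)).
    assert (P0 : 0 <= - INR K * e t (nth i F 0%nat)) by nra.
    assert (P1 : - INR K * e t (nth i F 0%nat) < IZR (Z.of_nat K)) by (rewrite <- INR_IZR_INZ; nra).
    pose proof (Int_part_nonneg _ P0). pose proof (Int_part_lt_IZR _ _ P1). lia.
  - pose proof (form_bound_box t (i - f) Ht ltac:(lia)). lia.
Qed.

Lemma same_box_forms t1 t2 : (t1 <= T)%nat -> (t2 <= T)%nat ->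
  (forall i, (i < f + (n - k + 1))%nat -> digit t1 i = digit t2 i) ->
  forall j, (j <= n - k)%nat -> z t1 j = z t2 j.
Proof.
  intros Ht1 Ht2 Heq j Hj. specialize (Heq (f + j)%nat ltac:(lia)). unfold digit in Heq.
  replace (Nat.ltb (f + j) f) with false in Heq by (symmetry; apply Nat.ltb_ge; lia).
  replace (f + j - f)%nat with j in Heq by lia.
  pose proof (form_bound_box t1 j Ht1 Hj). pose proof (form_bound_box t2 j Ht2 Hj). lia.
Qed.

Lemma same_box_errors t1 t2 :
  (forall i, (i < f + (n - k + 1))%nat -> digit t1 i = digit t2 i) ->
  forall m, In m F -> Rabs (e t2 m - e t1 m) <= / INR K.
Proof.
  intros Heq m Hm. assert (HKpos : 0 < INR K) by (apply (lt_INR 0); lia).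
  destruct (In_nth F m 0%nat Hm) as [i [Hi <-]].
  specialize (Heq i ltac:(fold f in Hi; lia)). unfold digit in Heq.
  replace (Nat.ltb i f) with true in Heq by (symmetry; apply Nat.ltb_lt; exact Hi).
  destruct (floor_error_bounds t1 (nth i F 0%nat)); destruct (floor_error_bounds t2 (nth i F 0%nat)).
  assert (P1 : 0 <= - INR K * e t1 (nth i F 0%nat)) by nra.
  assert (P2 : 0 <= - INR K * e t2 (nth i F 0%nat)) by nra.
  pose proof (Int_part_nonneg _ P1). pose proof (Int_part_nonneg _ P2).
  assert (Hd : Rabs (- INR K * e t1 (nth i F 0%nat) - - INR K * e t2 (nth i F 0%nat)) < 1)
    by (apply Int_part_eq_dist_lt_1; lia).
  replace (- INR K * e t1 (nth i F 0%nat) - - INR K * e t2 (nth i F 0%nat))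
    with (INR K * (e t2 (nth i F 0%nat) - e t1 (nth i F 0%nat))) in Hd by ring.
  rewrite Rabs_mult, (Rabs_right (INR K)) in Hd by lra.
  apply Rmult_le_reg_l with (INR K); [exact HKpos|]. rewrite Rinv_r; lra.
Qed.

Theorem box_principle :
  has_approx xi n (C * (/ INR K + INR T * Rabs (zpoly a k xi) / INR H)) (INR T).
Proof.
  assert (Hradix : (radix_prod radix (f + (n - k + 1)) <= T)%nat).
  { unfold radix, T. rewrite radix_prod_two_blocks. unfold V.
    replace (2 * ((k + 2) * B * H) + 1)%nat with (2 * (k + 2) * B * H + 1)%nat by lia. lia. }
  destruct (pigeonhole_digits _ T radix digit Hradix (fun t i Ht Hi => digit_lt_radix t i Ht Hi))
    as [t1 [t2 [Ht12 Heq]]].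
  set (x := fun m => (u t2 m - u t1 m)%Z).
  assert (Hx0 : IZR (x 0%nat) = INR t2 - INR t1).
  { unfold x, u. simpl. rewrite minus_IZR, <- !INR_IZR_INZ. reflexivity. }
  assert (Hlt : INR t1 < INR t2) by (apply lt_INR; lia).
  assert (HtT : INR t2 <= INR T) by (apply le_INR; lia).
  pose proof (pos_INR t1).
  assert (Hee : forall m, IZR (x m) - IZR (x 0%nat) * xi ^ m = e t2 m - e t1 m).
  { intros m. rewrite Hx0. unfold x, e. rewrite minus_IZR. ring. }
  exists x. rewrite Hx0, Rabs_right by lra. split; [lra | split; [lra|]].
  intros m Hm. rewrite <- Hx0, Rabs_minus_sym, Hee.
  eapply Rle_trans.
  - apply (Hstable (fun m => e t2 m - e t1 m) (IZR (x 0%nat)) (/ INR K)); [| | | | exact Hm].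
    + rewrite !floor_error_0. ring.
    + left. apply Rinv_0_lt_compat, (lt_INR 0). lia.
    + intros j Hj.
      pose proof (form_value t1 j). pose proof (form_value t2 j).
      rewrite (same_box_forms t1 t2 ltac:(lia) ltac:(lia) Heq j Hj) in *.
      rewrite (sum_eq _ (fun i => IZR (a i) * e t2 (i + j)%nat - IZR (a i) * e t1 (i + j)%nat))
        by (intros; ring).
      rewrite minus_sum, Hx0. lra.
    + exact (same_box_errors t1 t2 Heq).
  - apply Rmult_le_compat_l; [exact HC|]. apply Rplus_le_compat_l.
    assert (0 < INR H) by (apply (lt_INR 0); lia).
    unfold Rdiv. apply Rmult_le_compat_r; [left; apply Rinv_0_lt_compat; lra|].
    apply Rmult_le_compat_r; [apply Rabs_pos|]. rewrite Hx0, Rabs_right; lra.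
Qed.

End Box_principle.

(** * Stability of the error recurrence *)

Lemma lead_row_bound (a : nat -> Z) k (e : nat -> R) (q M : R) (H B : nat) :
  (1 <= k)%nat -> (1 <= H)%nat -> Rabs (IZR (a k)) = INR H ->
  (forall i, (i <= k)%nat -> Rabs (IZR (a i)) <= INR (B * H)) ->
  (forall i, (i < k)%nat -> Rabs (e i) <= M) ->
  Rabs (sum_f_R0 (fun i => IZR (a i) * e i) k) <= q ->
  Rabs (e k) <= q / INR H + INR k * INR B * M.
Proof.
  intros Hk HH Hak Ha He Hq.
  assert (HHpos : 0 < INR H) by (apply (lt_INR 0); lia).
  replace k with (S (k - 1)) in Hq at 1 by lia. rewrite tech5 in Hq.
  replace (S (k - 1)) with k in Hq by lia.
  set (S0 := sum_f_R0 (fun i => IZR (a i) * e i) (k - 1)) in Hq.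
  assert (HS0 : Rabs S0 <= INR (B * H) * M * INR k).
  { eapply Rle_trans; [apply sum_f_R0_triangle|].
    replace (INR k) with (INR (S (k - 1))) by (f_equal; lia).
    apply sum_f_R0_le_const. intros i Hi. rewrite Rabs_mult.
    apply Rmult_le_compat; [apply Rabs_pos | apply Rabs_pos | apply Ha; lia | apply He; lia]. }
  assert (Hek : INR H * Rabs (e k) <= q + Rabs S0).
  { rewrite <- Hak, <- Rabs_mult.
    replace (IZR (a k) * e k) with ((S0 + IZR (a k) * e k) - S0) by ring.
    eapply Rle_trans; [apply Rabs_triang|]. rewrite Rabs_Ropp. lra. }
  rewrite mult_INR in HS0.
  apply Rmult_le_reg_l with (INR H); [exact HHpos|].
  rewrite Rmult_plus_distr_l. unfold Rdiv.
  replace (INR H * (q * / INR H)) with q by (field; lra). nra.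
Qed.

Section Lead_stability.

Variables (xi : R) (n k : nat) (a : nat -> Z) (H B : nat) (e : nat -> R) (s eta : R).
Hypotheses (Hkn : (1 <= k <= n)%nat) (HH : (1 <= H)%nat) (Hak : Rabs (IZR (a k)) = INR H)
  (Ha : forall i, (i <= k)%nat -> Rabs (IZR (a i)) <= INR (B * H))
  (He0 : e 0%nat = 0) (Heta : 0 <= eta)
  (Hrel : forall j, (j <= n - k)%nat ->
     sum_f_R0 (fun i => IZR (a i) * e (i + j)%nat) k = - (s * xi ^ j * zpoly a k xi))
  (Hfree : forall m, In m (seq 1 (k - 1)) -> Rabs (e m) <= eta).

(* Row [j] of the recurrence determines [e (k + j)] from [e j, ..., e (k + j - 1)]. *)
Lemma lead_errors_geometric m : (m <= n)%nat ->
  Rabs (e m) <= INR (k * B + 1) ^ m * (eta + Rabs s * pow_bound xi n * Rabs (zpoly a k xi) / INR H).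
Proof.
  pose proof (pow_bound_ge_1 xi n) as Hrho. pose proof (Rabs_pos (zpoly a k xi)) as Hd.
  set (G := INR (k * B + 1)). set (d := Rabs (zpoly a k xi)) in *.
  assert (HHpos : 0 < INR H) by (apply (lt_INR 0); lia).
  assert (HG : G = INR k * INR B + 1) by (unfold G; rewrite plus_INR, mult_INR; reflexivity).
  assert (HkB : 0 <= INR k * INR B) by (apply Rmult_le_pos; apply pos_INR).
  assert (Hq : 0 <= Rabs s * pow_bound xi n * d / INR H).
  { unfold Rdiv. apply Rmult_le_pos; [|left; apply Rinv_0_lt_compat; lra].
    apply Rmult_le_pos; [apply Rmult_le_pos; [apply Rabs_pos | lra] | exact Hd]. }
  set (S0 := eta + Rabs s * pow_bound xi n * d / INR H).
  induction m as [m IH] using (well_founded_induction lt_wf). intros Hm.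
  destruct (Nat.eq_dec m 0) as [->|Hm0].
  { rewrite He0, Rabs_R0. simpl. unfold S0. lra. }
  assert (HGm : 1 <= G ^ (m - 1)) by (apply pow_R1_Rle; lra).
  destruct (Nat.lt_ge_cases m k) as [Hlt|Hge].
  { assert (Rabs (e m) <= eta) by (apply Hfree, in_seq; lia).
    assert (1 <= G ^ m) by (apply pow_R1_Rle; lra). unfold S0 in *. nra. }
  set (j := (m - k)%nat).
  assert (Hrow : Rabs (sum_f_R0 (fun i => IZR (a i) * e (i + j)%nat) k) <= Rabs s * pow_bound xi n * d).
  { rewrite Hrel by (unfold j; lia). rewrite Rabs_Ropp, !Rabs_mult. fold d.
    apply Rmult_le_compat_r; [exact Hd|]. apply Rmult_le_compat_l; [apply Rabs_pos|].
    apply Rabs_pow_le_pow_bound. unfold j; lia. }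
  assert (Hprev : forall i, (i < k)%nat -> Rabs (e (i + j)%nat) <= G ^ (m - 1) * S0).
  { intros i Hi. eapply Rle_trans; [apply IH; unfold j; lia|].
    apply Rmult_le_compat_r; [unfold S0; lra|]. apply Rle_pow; [lra | unfold j; lia]. }
  pose proof (lead_row_bound a k (fun i => e (i + j)%nat) _ _ H B ltac:(lia) HH Hak Ha Hprev Hrow) as Hem.
  simpl in Hem. replace (k + j)%nat with m in Hem by (unfold j; lia).
  replace m with (S (m - 1)) at 2 by lia. simpl. rewrite HG in *.
  unfold S0 in *. nra.
Qed.

End Lead_stability.

Lemma stable_recurrence_lead xi n k a (H B : nat) :
  (1 <= k <= n)%nat -> (1 <= H)%nat -> Rabs (IZR (a k)) = INR H ->
  (forall i, (i <= k)%nat -> Rabs (IZR (a i)) <= INR (B * H)) ->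
  stable_recurrence xi n k a (seq 1 (k - 1)) H (INR (k * B + 1) ^ n * pow_bound xi n).
Proof.
  intros Hkn HH Hak Ha e s eta He0 Heta Hrel Hfree m Hm.
  eapply Rle_trans; [apply (lead_errors_geometric xi n k a H B e s eta); auto; lia|].
  pose proof (pow_bound_ge_1 xi n). pose proof (Rabs_pos (zpoly a k xi)). pose proof (Rabs_pos s).
  assert (HHpos : 0 < INR H) by (apply (lt_INR 0); lia).
  assert (HG : 1 <= INR (k * B + 1)) by (apply (le_INR 1); lia).
  assert (INR (k * B + 1) ^ m <= INR (k * B + 1) ^ n) by (apply Rle_pow; [lra | lia]).
  assert (0 <= INR (k * B + 1) ^ m) by (apply pow_le; lra).
  assert (Hsd : 0 <= Rabs s * Rabs (zpoly a k xi) / INR H).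
  { unfold Rdiv. apply Rmult_le_pos; [apply Rmult_le_pos | left; apply Rinv_0_lt_compat]; lra. }
  replace (Rabs s * pow_bound xi n * Rabs (zpoly a k xi) / INR H)
    with (pow_bound xi n * (Rabs s * Rabs (zpoly a k xi) / INR H)) by (field; lra).
  apply Rle_trans with (INR (k * B + 1) ^ n * (pow_bound xi n * (eta + Rabs s * Rabs (zpoly a k xi) / INR H)));
    [|right; ring].
  apply Rmult_le_compat; [lra | nra | lra | nra].
Qed.

Lemma cramer2_bound (al be ga y1 y2 q0 q1 h Q c0 : R) :
  al * y1 + be * y2 = q0 -> ga * y1 + al * y2 = q1 ->
  Rabs al <= h -> Rabs be <= h -> Rabs ga <= h -> Rabs q0 <= Q -> Rabs q1 <= Q ->
  0 < h -> h ^ 2 <= c0 * Rabs (al * al - ga * be) ->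
  Rabs y1 <= 2 * c0 * Q / h /\ Rabs y2 <= 2 * c0 * Q / h.
Proof.
  intros E0 E1 Hal Hbe Hga Hq0 Hq1 Hh HD.
  set (D := al * al - ga * be) in HD.
  assert (Hc0 : 0 < c0).
  { pose proof (Rabs_pos D). destruct (Rle_lt_dec c0 0); [nra | lra]. }
  assert (Hcr : forall y u v w1 w2, D * y = u * w1 - v * w2 -> Rabs u <= h -> Rabs v <= h ->
            Rabs w1 <= Q -> Rabs w2 <= Q -> Rabs y <= 2 * c0 * Q / h).
  { intros y u v w1 w2 Ey Hu Hv Hw1 Hw2.
    assert (HDy : Rabs D * Rabs y <= 2 * h * Q).
    { rewrite <- Rabs_mult, Ey. eapply Rle_trans; [apply Rabs_triang|]. rewrite Rabs_Ropp, !Rabs_mult.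
      assert (Rabs u * Rabs w1 <= h * Q) by (apply Rmult_le_compat; try apply Rabs_pos; lra).
      assert (Rabs v * Rabs w2 <= h * Q) by (apply Rmult_le_compat; try apply Rabs_pos; lra). lra. }
    assert (Hhy : h * h * Rabs y <= c0 * (2 * h * Q)).
    { apply Rle_trans with (c0 * Rabs D * Rabs y).
      - apply Rmult_le_compat_r; [apply Rabs_pos|]. simpl in HD. lra.
      - rewrite Rmult_assoc. apply Rmult_le_compat_l; lra. }
    apply Rmult_le_reg_l with h; [exact Hh|]. unfold Rdiv.
    replace (h * (2 * c0 * Q * / h)) with (2 * c0 * Q) by (field; lra). nra. }
  split.
  - apply (Hcr y1 al be q0 q1); try assumption. unfold D. rewrite <- E0, <- E1. ring.
  - apply (Hcr y2 al ga q1 q0); try assumption. unfold D. rewrite <- E0, <- E1. ring.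
Qed.

Lemma sum_f_R0_extract (g : nat -> R) M p : (p <= M)%nat ->
  sum_f_R0 g M = g p + sum_f_R0 (fun i => if Nat.eqb i p then 0 else g i) M.
Proof.
  induction M as [|M IH]; intros Hp.
  - replace p with 0%nat by lia. simpl. ring.
  - rewrite !tech5. destruct (Nat.eq_dec p (S M)) as [->|Hne].
    + rewrite Nat.eqb_refl, (sum_eq (fun i => if Nat.eqb i (S M) then 0 else g i) g); [ring|].
      intros i Hi. destruct (Nat.eqb_spec i (S M)); [lia | reflexivity].
    + rewrite IH by lia. destruct (Nat.eqb_spec (S M) p); [lia | ring].
Qed.

Lemma sum_f_R0_two_terms_bound (c : nat -> R) M p q b :
  (p <= M)%nat -> (q <= M)%nat -> p <> q -> 0 <= b ->
  (forall i, (i <= M)%nat -> i <> p -> i <> q -> Rabs (c i) <= b) ->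
  Rabs (sum_f_R0 c M - c p - c q) <= INR (S M) * b.
Proof.
  intros Hp Hq Hpq Hb0 Hb.
  rewrite (sum_f_R0_extract c M p Hp), (sum_f_R0_extract _ M q Hq).
  destruct (Nat.eqb_spec q p) as [E|_]; [lia|].
  replace (c p + (c q + sum_f_R0 _ M) - c p - c q) with
    (sum_f_R0 (fun i => if Nat.eqb i q then 0 else if Nat.eqb i p then 0 else c i) M) by ring.
  rewrite Rmult_comm. eapply Rle_trans; [apply sum_f_R0_triangle|]. apply sum_f_R0_le_const.
  intros i Hi. destruct (Nat.eqb_spec i q); [rewrite Rabs_R0; exact Hb0|].
  destruct (Nat.eqb_spec i p); [rewrite Rabs_R0; exact Hb0 | apply Hb; assumption].
Qed.

Definition trunc (a : nat -> Z) (k i : nat) : Z := if Nat.leb i k then a i else 0%Z.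

Lemma trunc_le a k i : (i <= k)%nat -> trunc a k i = a i.
Proof. intros. unfold trunc. replace (Nat.leb i k) with true by (symmetry; apply Nat.leb_le; lia). reflexivity. Qed.

Lemma trunc_gt a k i : (k < i)%nat -> trunc a k i = 0%Z.
Proof. intros. unfold trunc. replace (Nat.leb i k) with false by (symmetry; apply Nat.leb_gt; lia). reflexivity. Qed.

Lemma sum_f_R0_trunc a k (e : nat -> R) j :
  sum_f_R0 (fun i => IZR (a i) * e (i + j)%nat) k =
  sum_f_R0 (fun i => IZR (trunc a k i) * e (i + j)%nat) (S k).
Proof.
  rewrite tech5, trunc_gt, Rmult_0_l, Rplus_0_r by lia.
  apply sum_eq. intros i Hi. rewrite trunc_le by lia. reflexivity.
Qed.

Definition skip_pair (p k : nat) : list nat := seq 1 (p - 1) ++ seq (p + 2) (k - p).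

Lemma in_skip_pair p k m :
  (1 <= m <= k + 1)%nat -> m <> p -> m <> (p + 1)%nat -> In m (skip_pair p k).
Proof.
  intros Hm H1 H2. unfold skip_pair. apply in_or_app.
  destruct (Nat.lt_ge_cases m p); [left | right]; apply in_seq; lia.
Qed.

Lemma length_skip_pair p k : (1 <= p <= k)%nat -> length (skip_pair p k) = (k - 1)%nat.
Proof. intros. unfold skip_pair. rewrite length_app, !length_seq. lia. Qed.

Section Pair_stability.

Variables (xi : R) (k : nat) (a : nat -> Z) (p H : nat) (c0 : R) (e : nat -> R) (s eta : R).
Hypotheses (Hp : (1 <= p <= k)%nat) (HH : (1 <= H)%nat)
  (Ha : forall i, (i <= k)%nat -> Rabs (IZR (a i)) <= INR H)
  (He0 : e 0%nat = 0) (Heta : 0 <= eta)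
  (Hrel : forall j, (j <= k + 1 - k)%nat ->
     sum_f_R0 (fun i => IZR (a i) * e (i + j)%nat) k = - (s * xi ^ j * zpoly a k xi))
  (Hfree : forall m, In m (skip_pair p k) -> Rabs (e m) <= eta).

Let Q := Rabs s * pow_bound xi (k + 1) * Rabs (zpoly a k xi) + INR (S (S k)) * (INR H * eta).

Lemma pair_known_term i j : (i <= S k)%nat -> (j <= 1)%nat ->
  (i + j)%nat <> p -> (i + j)%nat <> (p + 1)%nat -> Rabs (IZR (trunc a k i) * e (i + j)%nat) <= INR H * eta.
Proof.
  intros Hi Hj H1 H2. rewrite Rabs_mult.
  destruct (Nat.le_gt_cases i k) as [Hik|Hik].
  - rewrite trunc_le by exact Hik.
    apply Rmult_le_compat; [apply Rabs_pos | apply Rabs_pos | apply Ha; exact Hik|].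
    destruct (Nat.eq_dec (i + j) 0) as [E|E].
    + rewrite E, He0, Rabs_R0. exact Heta.
    + apply Hfree, in_skip_pair; lia.
  - rewrite trunc_gt, Rabs_R0, Rmult_0_l by exact Hik.
    apply Rmult_le_pos; [apply pos_INR | exact Heta].
Qed.

Lemma pair_row j : (j <= 1)%nat ->
  exists q, IZR (trunc a k (p - j)) * e p + IZR (trunc a k (p + 1 - j)) * e (p + 1)%nat = q /\ Rabs q <= Q.
Proof.
  intros Hj. set (c := fun i => IZR (trunc a k i) * e (i + j)%nat).
  assert (Hr := sum_f_R0_two_terms_bound c (S k) (p - j) (p + 1 - j) (INR H * eta)
    ltac:(lia) ltac:(lia) ltac:(lia) ltac:(apply Rmult_le_pos; [apply pos_INR | exact Heta])
    (fun i Hi H1 H2 => pair_known_term i j Hi Hj ltac:(lia) ltac:(lia))).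
  unfold c in Hr. rewrite <- sum_f_R0_trunc, Hrel in Hr by lia.
  replace (p - j + j)%nat with p in Hr by lia. replace (p + 1 - j + j)%nat with (p + 1)%nat in Hr by lia.
  eexists. split; [reflexivity|].
  set (r := - (s * xi ^ j * zpoly a k xi) - IZR (trunc a k (p - j)) * e p - IZR (trunc a k (p + 1 - j)) * e (p + 1)%nat) in Hr.
  replace (IZR (trunc a k (p - j)) * e p + IZR (trunc a k (p + 1 - j)) * e (p + 1)%nat) with (- (s * xi ^ j * zpoly a k xi) - r)
    by (unfold r; ring).
  eapply Rle_trans; [apply Rabs_triang|]. rewrite !Rabs_Ropp, !Rabs_mult. unfold Q.
  apply Rplus_le_compat; [|exact Hr].
  apply Rmult_le_compat_r; [apply Rabs_pos|]. apply Rmult_le_compat_l; [apply Rabs_pos|].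
  apply Rabs_pow_le_pow_bound. lia.
Qed.

Hypothesis HD : INR H ^ 2 <= c0 * Rabs (IZR (trunc a k p * trunc a k p - trunc a k (p - 1) * trunc a k (p + 1))%Z).

Lemma pair_unknowns_bound : Rabs (e p) <= 2 * c0 * Q / INR H /\ Rabs (e (p + 1)%nat) <= 2 * c0 * Q / INR H.
Proof.
  destruct (pair_row 0 ltac:(lia)) as [q0 [E0 Hq0]]. destruct (pair_row 1 ltac:(lia)) as [q1 [E1 Hq1]].
  rewrite !Nat.sub_0_r in E0. replace (p + 1 - 1)%nat with p in E1 by lia.
  assert (Hta : forall i, Rabs (IZR (trunc a k i)) <= INR H).
  { intros i. unfold trunc. destruct (Nat.leb_spec i k); [apply Ha; lia|].
    rewrite Rabs_R0. apply pos_INR. }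
  apply (cramer2_bound _ _ _ _ _ _ _ _ _ _ E0 E1); try apply Hta; try assumption.
  - apply (lt_INR 0). lia.
  - rewrite minus_IZR, !mult_IZR in HD. exact HD.
Qed.

End Pair_stability.

(* For [n = k + 1] the two rows of the recurrence form a 2x2 system in [e p], [e (p + 1)],
   solvable by Cramer's rule when the minor [a_p^2 - a_(p-1) a_(p+1)] is large. *)
Lemma stable_recurrence_pair xi k a p (H : nat) c0 :
  (1 <= p <= k)%nat -> (1 <= H)%nat ->
  (forall i, (i <= k)%nat -> Rabs (IZR (a i)) <= INR H) ->
  INR H ^ 2 <= c0 * Rabs (IZR (trunc a k p * trunc a k p - trunc a k (p - 1) * trunc a k (p + 1))%Z) ->
  stable_recurrence xi (k + 1) k a (skip_pair p k) H (2 * c0 * (pow_bound xi (k + 1) + INR k + 2) + 1).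
Proof.
  intros Hp HH Ha HD e s eta He0 Heta Hrel Hfree m Hm.
  assert (HHpos : 1 <= INR H) by (apply (le_INR 1); lia).
  assert (Hc0 : 0 <= c0).
  { pose proof (Rabs_pos (IZR (trunc a k p * trunc a k p - trunc a k (p - 1) * trunc a k (p + 1)))).
    destruct (Rle_lt_dec 0 c0); [assumption|]. simpl in HD. nra. }
  set (rh := pow_bound xi (k + 1)). set (d := Rabs (zpoly a k xi)).
  pose proof (pow_bound_ge_1 xi (k + 1)). pose proof (Rabs_pos (zpoly a k xi)). pose proof (pos_INR k).
  assert (Hsd : 0 <= Rabs s * d / INR H).
  { unfold Rdiv. apply Rmult_le_pos; [apply Rmult_le_pos; [apply Rabs_pos | unfold d; lra] |].
    left; apply Rinv_0_lt_compat; lra. }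
  set (X := Rabs s * d / INR H) in *.
  assert (Hfin : 2 * c0 * (Rabs s * rh * d + INR (S (S k)) * (INR H * eta)) / INR H
                 <= (2 * c0 * (rh + INR k + 2) + 1) * (eta + X)).
  { replace (2 * c0 * (Rabs s * rh * d + INR (S (S k)) * (INR H * eta)) / INR H)
      with (2 * c0 * (rh * X + (INR k + 2) * eta)) by (unfold X; rewrite !S_INR; field; lra).
    assert (0 <= c0 * (rh * eta)) by (apply Rmult_le_pos; [|apply Rmult_le_pos]; unfold rh; lra).
    assert (0 <= c0 * ((INR k + 2) * X)) by (apply Rmult_le_pos; [|apply Rmult_le_pos]; lra).
    nra. }
  destruct (classic (In m (skip_pair p k))) as [HmF|HmF].
  { eapply Rle_trans; [apply Hfree; exact HmF|].
    assert (0 <= c0 * ((rh + INR k + 2) * (eta + X))) by (apply Rmult_le_pos; [|apply Rmult_le_pos]; unfold rh in *; lra).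
    nra. }
  destruct (pair_unknowns_bound xi k a p H c0 e s eta Hp HH Ha He0 Heta Hrel Hfree HD) as [B1 B2].
  destruct (Nat.eq_dec m p) as [->|Hmp]; [exact (Rle_trans _ _ _ B1 Hfin)|].
  destruct (Nat.eq_dec m (p + 1)) as [->|Hmp1]; [exact (Rle_trans _ _ _ B2 Hfin)|].
  exfalso. apply HmF, in_skip_pair; assumption.
Qed.

(** * Choice of the box sizes *)

Definition approx_family (xi : R) (n f N : nat) (g C c2 K1 X : R) : Prop :=
  forall K : nat, (1 <= K)%nat -> K1 <= INR K -> c2 * INR K ^ (f + 1) <= Rpower X g ->
  has_approx xi n (C / INR K) (C * INR K ^ f * X ^ N).

Lemma approx_family_mono xi n f N g C C' c2 c2' K1 K1' X :
  0 <= X -> C <= C' -> c2 <= c2' -> K1 <= K1' ->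
  approx_family xi n f N g C c2 K1 X -> approx_family xi n f N g C' c2' K1' X.
Proof.
  intros HX HC Hc2 HK1 Hfam K HK HK1' HKc.
  assert (HKpos : 1 <= INR K) by (apply (le_INR 1); lia).
  assert (0 <= INR K ^ (f + 1)) by (apply pow_le; lra).
  eapply has_approx_mono; [| | apply Hfam; [exact HK | lra | nra]].
  - unfold Rdiv. apply Rmult_le_compat_r; [left; apply Rinv_0_lt_compat; lra | exact HC].
  - apply Rmult_le_compat_r; [apply pow_le; exact HX|].
    apply Rmult_le_compat_r; [apply pow_le; lra | exact HC].
Qed.

Lemma approx_family_inv xi n : xi <> 0 -> (1 <= n)%nat ->
  exists c, 1 <= c /\ forall f N g C c2 K1 X, 0 <= X ->
    approx_family (/ xi) n f N g C c2 K1 X ->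
    approx_family xi n f N g (c * C) c2 (Rmax K1 (2 * C / Rabs (/ xi) ^ n)) X.
Proof.
  intros Hxi Hn. destruct (has_approx_inv xi n Hxi Hn) as [c [Hc Hinv]].
  exists c. split; [exact Hc|]. intros f N g C c2 K1 X HX Hfam K HK HK1 HKc.
  assert (HKpos : 0 < INR K) by (apply (lt_INR 0); lia).
  assert (He : 0 < Rabs (/ xi) ^ n) by (apply pow_lt, Rabs_pos_lt, Rinv_neq_0_compat, Hxi).
  assert (Hsmall : C / INR K <= Rabs (/ xi) ^ n / 2).
  { assert (H2 : 2 * C / Rabs (/ xi) ^ n <= INR K) by (eapply Rle_trans; [apply Rmax_r | exact HK1]).
    apply Rmult_le_reg_r with (INR K * 2 / Rabs (/ xi) ^ n).
    { unfold Rdiv. apply Rmult_lt_0_compat; [lra | apply Rinv_0_lt_compat; lra]. }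
    replace (C / INR K * (INR K * 2 / Rabs (/ xi) ^ n)) with (2 * C / Rabs (/ xi) ^ n) by (field; lra).
    replace (Rabs (/ xi) ^ n / 2 * (INR K * 2 / Rabs (/ xi) ^ n)) with (INR K) by (field; lra).
    exact H2. }
  assert (Happ := Hfam K HK (Rle_trans _ _ _ (Rmax_l _ _) HK1) HKc).
  eapply has_approx_mono; [| | exact (Hinv _ _ Hsmall Happ)]; right; unfold Rdiv; ring.
Qed.

Lemma box_size_le (K H B k L f N : nat) : (1 <= K)%nat -> (1 <= H)%nat -> (L <= f)%nat ->
  INR (K ^ L * (2 * (k + 2) * B * H + 1) ^ N) <= INR K ^ f * (INR (2 * (k + 2) * B + 1) ^ N * INR H ^ N).
Proof.
  intros HK HH HL. rewrite mult_INR, !pow_INR, <- Rpow_mult_distr.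
  assert (1 <= INR K) by (apply (le_INR 1); lia).
  apply Rmult_le_compat; [apply pow_le; lra | apply pow_le, pos_INR | apply Rle_pow; assumption|].
  apply pow_incr. split; [apply pos_INR|].
  rewrite !plus_INR, !mult_INR. simpl.
  assert (1 <= INR H) by (apply (le_INR 1); lia). pose proof (pos_INR k). pose proof (pos_INR B). nra.
Qed.

(* Since [H^m |P(xi)| <= X^(m - w)], this is where the exponent [w - (n - k)] bounding the
   admissible box sizes [K] comes from. *)
Lemma box_error_le (T Kr Hr d X w A cd : R) (f m : nat) :
  1 <= Kr -> 1 <= Hr <= X -> 0 <= A -> 0 <= d <= cd * Rpower X (- w) ->
  T <= Kr ^ f * A * Hr ^ S m -> A * cd * Kr ^ (f + 1) <= Rpower X (w - INR m) ->
  T * d / Hr <= / Kr.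
Proof.
  intros HK HH HA Hd HT Hc.
  assert (HXm : Rpower X (w - INR m) * (Hr ^ m * d) <= cd).
  { apply Rle_trans with (Rpower X (w - INR m) * (X ^ m * (cd * Rpower X (- w)))).
    - apply Rmult_le_compat_l; [left; apply Rpower_pos|].
      apply Rmult_le_compat; [apply pow_le; lra | lra | apply pow_incr; lra | lra].
    - rewrite <- Rpower_pow by lra.
      replace (Rpower X (w - INR m) * (Rpower X (INR m) * (cd * Rpower X (- w))))
        with (cd * (Rpower X (w - INR m) * Rpower X (INR m) * Rpower X (- w))) by ring.
      rewrite <- !Rpower_plus. replace (w - INR m + INR m + - w) with 0 by ring.
      rewrite Rpower_O by lra. lra. }
  assert (HKf : 0 < Kr ^ f) by (apply pow_lt; lra).
  assert (Hm : 0 <= Hr ^ m * d) by (apply Rmult_le_pos; [apply pow_le |]; lra).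
  apply Rle_trans with (Kr ^ f * A * (Hr ^ m * d)).
  - apply Rmult_le_reg_r with Hr; [lra|]. unfold Rdiv.
    rewrite Rmult_assoc, Rinv_l, Rmult_1_r by lra.
    replace (Kr ^ f * A * (Hr ^ m * d) * Hr) with (Kr ^ f * A * Hr ^ S m * d) by (simpl; ring).
    apply Rmult_le_compat_r; lra.
  - rewrite pow_add, pow_1 in Hc.
    apply Rmult_le_reg_l with (Rpower X (w - INR m) * Kr); [apply Rmult_lt_0_compat; [apply Rpower_pos | lra]|].
    replace (Rpower X (w - INR m) * Kr * / Kr) with (Rpower X (w - INR m)) by (field; lra).
    replace (Rpower X (w - INR m) * Kr * (Kr ^ f * A * (Hr ^ m * d)))
      with ((A * (Kr ^ f * Kr)) * (Rpower X (w - INR m) * (Hr ^ m * d))) by ring.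
    apply Rle_trans with (A * (Kr ^ f * Kr) * cd); [apply Rmult_le_compat_l; [apply Rmult_le_pos; [exact HA | apply Rmult_le_pos; lra] | exact HXm]|].
    lra.
Qed.

Lemma has_approx_of_stable xi n k a H B F CE K :
  (1 <= H)%nat -> (1 <= B)%nat -> 0 <= CE -> (1 <= K)%nat ->
  (forall i, (i <= k)%nat -> Rabs (IZR (a i)) <= INR (B * H)) ->
  stable_recurrence xi n k a F H CE ->
  let T := (K ^ length F * (2 * (k + 2) * B * H + 1) ^ (n - k + 1))%nat in
  INR T * pow_bound xi n * Rabs (zpoly a k xi) / INR H <= / INR K ->
  has_approx xi n (2 * CE / INR K) (INR T).
Proof.
  intros HH HB HCE HK Ha Hstab T Hkey.
  assert (HKr : 1 <= INR K) by (apply (le_INR 1); lia).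
  assert (HHr : 1 <= INR H) by (apply (le_INR 1); lia).
  pose proof (pow_bound_ge_1 xi n). pose proof (pos_INR T). pose proof (Rabs_pos (zpoly a k xi)).
  assert (HK1 : / INR K <= 1) by (rewrite <- Rinv_1; apply Rinv_le_contravar; lra).
  assert (HTd : INR T * Rabs (zpoly a k xi) / INR H <= / INR K).
  { eapply Rle_trans; [|exact Hkey]. unfold Rdiv. apply Rmult_le_compat_r; [left; apply Rinv_0_lt_compat; lra|].
    assert (0 <= INR T * Rabs (zpoly a k xi)) by (apply Rmult_le_pos; lra). nra. }
  assert (HTH : INR T * pow_bound xi n * Rabs (zpoly a k xi) <= INR H).
  { unfold Rdiv in Hkey. apply Rmult_le_reg_r with (/ INR H); [apply Rinv_0_lt_compat; lra|].
    rewrite Rinv_r by lra. lra. }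
  eapply has_approx_mono; [| right; reflexivity | exact (box_principle xi n k a H B F CE K HH HB HCE HK Ha Hstab HTH)].
  assert (0 < / INR K) by (apply Rinv_0_lt_compat; lra).
  change (CE * (/ INR K + INR T * Rabs (zpoly a k xi) / INR H) <= 2 * CE / INR K). unfold Rdiv at 2. nra.
Qed.

Lemma approx_family_of_stable xi n k B cd CE w f :
  (1 <= B)%nat -> 0 < cd -> 0 <= CE ->
  exists C c2, 1 <= C /\ 0 < c2 /\
  forall X a H F, 1 <= X -> (1 <= H)%nat -> INR H <= X ->
    (forall i, (i <= k)%nat -> Rabs (IZR (a i)) <= INR (B * H)) ->
    (length F <= f)%nat -> stable_recurrence xi n k a F H CE ->
    Rabs (zpoly a k xi) <= cd * Rpower X (- w) ->
    approx_family xi n f (n - k + 1) (w - INR (n - k)) C c2 0 X.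
Proof.
  intros HB Hcd HCE.
  set (N := (n - k + 1)%nat). set (cV := INR (2 * (k + 2) * B + 1)).
  assert (HcVN : 1 <= cV ^ N) by (apply pow_R1_Rle; unfold cV; apply (le_INR 1); lia).
  pose proof (pow_bound_ge_1 xi n) as Hrho.
  set (C := Rmax 1 (Rmax (2 * CE) (cV ^ N))).
  exists C, (cV ^ N * pow_bound xi n * cd).
  split; [apply Rmax_l|]. split; [apply Rmult_lt_0_compat; [apply Rmult_lt_0_compat|]; lra|].
  intros X a H F HX HH HHX Ha HlF Hstab Hd K HK _ HKc.
  pose proof (Rabs_pos (zpoly a k xi)) as Hd0. set (d := Rabs (zpoly a k xi)) in *.
  set (T := (K ^ length F * (2 * (k + 2) * B * H + 1) ^ N)%nat).
  assert (HKr : 1 <= INR K) by (apply (le_INR 1); lia).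
  assert (HHr : 1 <= INR H) by (apply (le_INR 1); lia).
  assert (HT : INR T <= INR K ^ f * (cV ^ N * INR H ^ N)) by (apply box_size_le; assumption).
  assert (Hkey : INR T * pow_bound xi n * d / INR H <= / INR K).
  { apply (box_error_le _ _ _ d X w (cV ^ N * pow_bound xi n) cd f (n - k));
      [lra | lra | nra | split; [exact Hd0 | exact Hd] | | exact HKc].
    replace (S (n - k)) with N by (unfold N; lia).
    replace (INR K ^ f * (cV ^ N * pow_bound xi n) * INR H ^ N)
      with (INR K ^ f * (cV ^ N * INR H ^ N) * pow_bound xi n) by ring.
    apply Rmult_le_compat_r; lra. }
  eapply has_approx_mono; [| | exact (has_approx_of_stable xi n k a H B F CE K HH HB HCE HK Ha Hstab Hkey)].
  - unfold Rdiv. apply Rmult_le_compat_r; [left; apply Rinv_0_lt_compat; lra|].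
    eapply Rle_trans; [apply Rmax_l | apply Rmax_r].
  - change (INR T <= C * INR K ^ f * X ^ N). eapply Rle_trans; [exact HT|].
    assert (cV ^ N <= C) by (eapply Rle_trans; [apply Rmax_r | apply Rmax_r]).
    assert (INR H ^ N <= X ^ N) by (apply pow_incr; lra).
    assert (0 <= INR K ^ f) by (apply pow_le; lra). assert (0 <= INR H ^ N) by (apply pow_le; lra).
    replace (C * INR K ^ f * X ^ N) with (INR K ^ f * (C * X ^ N)) by ring.
    apply Rmult_le_compat_l; [lra|]. apply Rmult_le_compat; lra.
Qed.

Lemma exists_box_exponent (f N : nat) (g lam : R) :
  0 < g -> 0 < lam -> lam * (INR N * INR (f + 1) + g * INR f) < g ->
  exists be, 0 < be /\ 0 < g - (INR f + 1) * be /\ 0 < be * (1 - lam * INR f) - lam * INR N.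
Proof.
  intros Hg Hl Hcond. rewrite plus_INR in Hcond. simpl in Hcond.
  pose proof (pos_INR f). pose proof (pos_INR N).
  assert (HNf : 0 <= INR N * (INR f + 1)) by nra.
  assert (Hlf : 0 < 1 - lam * INR f) by nra.
  set (b1 := lam * INR N / (1 - lam * INR f)). set (b2 := g / (INR f + 1)).
  assert (Hb1 : 0 <= b1) by (unfold b1, Rdiv; apply Rmult_le_pos; [nra | left; apply Rinv_0_lt_compat; lra]).
  assert (Hb12 : b1 < b2).
  { unfold b1, b2. apply Rmult_lt_reg_r with ((1 - lam * INR f) * (INR f + 1)); [nra|].
    field_simplify; [lra | lra | lra]. }
  assert (E1 : (1 - lam * INR f) * b1 = lam * INR N) by (unfold b1; field; lra).
  assert (E2 : (INR f + 1) * b2 = g) by (unfold b2; field; lra).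
  exists ((b1 + b2) / 2). split; [lra|]. split; nra.
Qed.

Lemma exists_nat_between (r : R) : 1 <= r -> exists K : nat, (1 <= K)%nat /\ r < INR K <= 2 * r.
Proof.
  intros Hr. destruct (archimed r) as [Hup1 Hup2].
  assert (HupZ : (0 <= up r)%Z) by (apply le_IZR; lra).
  exists (Z.to_nat (up r)). rewrite INR_IZR_INZ, Z2Nat.id by exact HupZ.
  split; [|lra]. assert (Hpos : (0 < up r)%Z) by (apply lt_IZR; lra). lia.
Qed.


Lemma Rmax4_le a b c d X :
  Rmax a (Rmax b (Rmax c d)) <= X -> a <= X /\ b <= X /\ c <= X /\ d <= X.
Proof.
  intros H. pose proof (Rmax_l a (Rmax b (Rmax c d))). pose proof (Rmax_r a (Rmax b (Rmax c d))).
  pose proof (Rmax_l b (Rmax c d)). pose proof (Rmax_r b (Rmax c d)).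
  pose proof (Rmax_l c d). pose proof (Rmax_r c d). lra.
Qed.

Lemma div_le_Rpower_opp (C Kr X Y c0 e be lam : R) :
  0 < C -> 0 < X -> 0 < lam -> 0 < Y -> 0 < c0 -> Rpower X be < Kr ->
  Y <= c0 * Rpower X e -> C * Rpower c0 lam <= Rpower X (be - lam * e) ->
  C / Kr <= Rpower Y (- lam).
Proof.
  intros HC HX Hl HY Hc0 HK HYe Hc.
  assert (HYl : Rpower Y lam <= Rpower c0 lam * Rpower X (lam * e)).
  { replace (Rpower X (lam * e)) with (Rpower (Rpower X e) lam) by (rewrite Rpower_mult; f_equal; ring).
    rewrite Rpower_mult_distr by (try apply Rpower_pos; lra).
    apply Rle_Rpower_l; [lra | split; [exact HY | exact HYe]]. }
  assert (HXb : C * Rpower Y lam <= Rpower X be).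
  { replace be with (be - lam * e + lam * e) by ring. rewrite Rpower_plus.
    apply Rle_trans with (C * (Rpower c0 lam * Rpower X (lam * e))); [apply Rmult_le_compat_l; lra|].
    rewrite <- Rmult_assoc. apply Rmult_le_compat_r; [left; apply Rpower_pos | exact Hc]. }
  pose proof (Rpower_pos X be). pose proof (Rpower_pos Y lam).
  rewrite Rpower_Ropp. unfold Rdiv.
  apply Rmult_le_reg_r with (Kr * Rpower Y lam); [apply Rmult_lt_0_compat; lra|].
  replace (C * / Kr * (Kr * Rpower Y lam)) with (C * Rpower Y lam) by (field; lra).
  replace (/ Rpower Y lam * (Kr * Rpower Y lam)) with Kr by (field; lra). lra.
Qed.

(* Taking [K] of size [X^be] balances the error [C / K] against the denominator bound [C K^f X^N]. *)
Lemma lambda_set_of_approx_families xi n f N g lam C c2 K1 :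
  0 < g -> 0 < lam -> lam * (INR N * INR (f + 1) + g * INR f) < g -> 1 <= C -> 0 < c2 ->
  (1 <= N)%nat -> (forall X0, exists X, X0 <= X /\ 1 <= X /\ approx_family xi n f N g C c2 K1 X) ->
  lambda_set n xi lam.
Proof.
  intros Hg Hl Hcond HC Hc2 HN Hfam X0.
  destruct (exists_box_exponent f N g lam Hg Hl Hcond) as [be [Hbe [Hg1 Hg2]]].
  destruct (Hfam (Rmax X0 (Rmax (Rpower (Rmax (Rmax K1 1) 1) (/ be))
                  (Rmax (Rpower (Rmax (c2 * 2 ^ (f + 1)) 1) (/ (g - (INR f + 1) * be)))
                        (Rpower (Rmax (C * Rpower (C * 2 ^ f) lam) 1) (/ (be * (1 - lam * INR f) - lam * INR N)))))))
    as [X [HXM [HX1 HXK]]].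
  apply Rmax4_le in HXM as [HX0 [HM1 [HM2 HM3]]].
  set (r := Rpower X be).
  assert (Hr : Rmax K1 1 <= r) by (apply le_Rpower_of_root_le; [exact Hbe | exact HX1 | exact HM1]).
  pose proof (Rmax_l K1 1). pose proof (Rmax_r K1 1).
  destruct (exists_nat_between r ltac:(lra)) as [K [HK [HKlo HKhi]]].
  assert (HKc : c2 * INR K ^ (f + 1) <= Rpower X g).
  { apply Rle_trans with (c2 * (2 * r) ^ (f + 1)); [apply Rmult_le_compat_l; [lra | apply pow_incr; lra]|].
    rewrite Rpow_mult_distr. unfold r. rewrite Rpower_pow_INR by lra.
    replace g with (g - (INR f + 1) * be + be * INR (f + 1)) by (rewrite plus_INR; simpl; ring).
    rewrite Rpower_plus, <- Rmult_assoc.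
    apply Rmult_le_compat_r; [left; apply Rpower_pos|]. apply le_Rpower_of_root_le; [exact Hg1 | exact HX1 | exact HM2]. }
  destruct (HXK K HK ltac:(lra) HKc) as [x [Hx1 [Hx2 Hx3]]].
  assert (HKf : 1 <= INR K ^ f) by (apply pow_R1_Rle; lra).
  assert (HXN : X <= X ^ N).
  { destruct N as [|N']; [lia|]. simpl. rewrite <- (Rmult_1_r X) at 1. apply Rmult_le_compat_l; [lra|]. apply pow_R1_Rle; lra. }
  assert (HY : X <= C * INR K ^ f * X ^ N).
  { apply Rle_trans with (1 * 1 * X ^ N); [lra|].
    apply Rmult_le_compat_r; [lra|]. apply Rmult_le_compat; lra. }
  exists (C * INR K ^ f * X ^ N). split; [lra|].
  exists x. split; [exact Hx1 | split; [exact Hx2|]].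
  intros m Hm. eapply Rle_trans; [apply Hx3; exact Hm|].
  apply (div_le_Rpower_opp _ _ X _ (C * 2 ^ f) (be * INR f + INR N) be); try lra.
  - apply Rmult_lt_0_compat; [lra | apply pow_lt; lra].
  - exact HKlo.
  - rewrite Rpower_plus, <- Rpower_pow_INR, Rpower_pow by lra. fold r.
    replace (C * 2 ^ f * (r ^ f * X ^ N)) with (C * (2 * r) ^ f * X ^ N) by (rewrite Rpow_mult_distr; ring).
    apply Rmult_le_compat_r; [apply pow_le; lra|]. apply Rmult_le_compat_l; [lra|]. apply pow_incr; lra.
  - replace (be - lam * (be * INR f + INR N)) with (be * (1 - lam * INR f) - lam * INR N) by ring.
    apply le_Rpower_of_root_le; [exact Hg2 | exact HX1 | exact HM3].
Qed.

(** * Approximations from small polynomial values *)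

Definition small_zpoly (lead : bool) (k : nat) (xi w X : R) (a : nat -> Z) : Prop :=
  0 < Rabs (zpoly a k xi) /\ Rabs (zpoly a k xi) <= Rpower X (- w) /\
  (forall j, (j <= k)%nat -> Rabs (IZR (a j)) <= X) /\
  (lead = true -> forall j, (j < k)%nat -> Rabs (IZR (a j)) <= Rabs (IZR (a k))).

Lemma w_set_small_zpoly lead k xi w :
  w_set lead k xi w -> forall X0, exists X, X0 <= X /\ exists a, small_zpoly lead k xi w X a.
Proof. intros Hw X0. exact (Hw X0). Qed.

Definition small_values_approximable (lead : bool) (k n : nat) (xi w : R) : Prop :=
  exists C c2 K1 Xt, 1 <= C /\ 0 < c2 /\
  forall X a, Xt <= X -> 1 <= X -> small_zpoly lead k xi w X a ->
    approx_family xi n (k - 1) (n - k + 1) (w - INR (n - k)) C c2 K1 X.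

Lemma lambda_set_of_small_values lead k n xi w lam :
  (2 <= k <= n)%nat -> 0 < lam -> 0 < (INR k - 1) * w + INR n ->
  lam * ((INR k - 1) * w + INR n) < w - INR n + INR k ->
  w_set lead k xi w -> small_values_approximable lead k n xi w -> lambda_set n xi lam.
Proof.
  intros Hkn Hl HD Hcond Hw [C [c2 [K1 [Xt [HC [Hc2 Happ]]]]]].
  assert (HkR : INR (k - 1) = INR k - 1) by (rewrite minus_INR by lia; reflexivity).
  assert (HnkR : INR (n - k) = INR n - INR k) by (rewrite minus_INR by lia; reflexivity).
  apply (lambda_set_of_approx_families xi n (k - 1) (n - k + 1) (w - INR (n - k)) lam C c2 K1);
    try assumption; try lia.
  - rewrite HnkR. nra.
  - replace (INR (k - 1 + 1)) with (INR k) by (f_equal; lia).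
    rewrite plus_INR, HkR, HnkR. simpl. nra.
  - intros X0. destruct (w_set_small_zpoly _ _ _ _ Hw (Rmax (Rmax X0 1) Xt)) as [X [HX [a Ha]]].
    pose proof (Rmax_l (Rmax X0 1) Xt). pose proof (Rmax_r (Rmax X0 1) Xt).
    pose proof (Rmax_l X0 1). pose proof (Rmax_r X0 1).
    exists X. split; [lra | split; [lra|]]. exact (Happ X a ltac:(lra) ltac:(lra) Ha).
Qed.

Lemma approx_family_of_lead xi k n B w cd :
  (1 <= k <= n)%nat -> (1 <= B)%nat -> 0 < cd ->
  exists C c2, 1 <= C /\ 0 < c2 /\
  forall X a H, 1 <= X -> (1 <= H)%nat -> INR H <= X -> Rabs (IZR (a k)) = INR H ->
    (forall i, (i <= k)%nat -> Rabs (IZR (a i)) <= INR (B * H)) ->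
    Rabs (zpoly a k xi) <= cd * Rpower X (- w) ->
    approx_family xi n (k - 1) (n - k + 1) (w - INR (n - k)) C c2 0 X.
Proof.
  intros Hkn HB Hcd.
  assert (HCE : 0 <= INR (k * B + 1) ^ n * pow_bound xi n).
  { apply Rmult_le_pos; [apply pow_le, pos_INR | pose proof (pow_bound_ge_1 xi n); lra]. }
  destruct (approx_family_of_stable xi n k B cd _ w (k - 1) HB Hcd HCE) as [C [c2 [HC [Hc2 Hfam]]]].
  exists C, c2. split; [exact HC | split; [exact Hc2|]].
  intros X a H HX HH HHX Hak Ha Hd.
  apply (Hfam X a H (seq 1 (k - 1))); try assumption.
  - rewrite length_seq. lia.
  - apply stable_recurrence_lead; assumption.
Qed.

Lemma small_values_approximable_lead k n xi w :
  (1 <= k <= n)%nat -> small_values_approximable true k n xi w.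
Proof.
  intros Hkn.
  destruct (approx_family_of_lead xi k n 1 w 1 Hkn (le_n 1) Rlt_0_1) as [C [c2 [HC [Hc2 Hfam]]]].
  exists C, c2, 0, 0. split; [exact HC | split; [exact Hc2|]].
  intros X a _ HX [Hp1 [Hp2 [Hp3 Hp4]]]. specialize (Hp4 eq_refl).
  assert (Hak : a k <> 0%Z).
  { intros E. destruct (zpoly_coef_neq_0 a k xi ltac:(intros E'; rewrite E', Rabs_R0 in Hp1; lra))
      as [i [Hi Hai]].
    pose proof (Rabs_IZR_ge_1 _ Hai). destruct (Nat.eq_dec i k) as [->|Hne]; [contradiction|].
    specialize (Hp4 i ltac:(lia)). rewrite E, Rabs_R0 in Hp4. lra. }
  assert (HHR : INR (Z.abs_nat (a k)) = Rabs (IZR (a k))) by apply INR_Zabs_nat.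
  apply (Hfam X a (Z.abs_nat (a k))); [exact HX | lia | rewrite HHR; apply Hp3; lia | | | lra].
  - symmetry. exact HHR.
  - intros i Hi. rewrite Nat.mul_1_l, HHR.
    destruct (Nat.eq_dec i k) as [->|Hne]; [lra | apply Hp4; lia].
Qed.

Lemma approx_family_direct_or_inverse xi n f N g C1 c21 C2 c22 :
  xi <> 0 -> (1 <= n)%nat -> 1 <= C1 -> 0 < c21 ->
  exists C c2 K1, 1 <= C /\ 0 < c2 /\ forall X, 1 <= X ->
    approx_family xi n f N g C1 c21 0 X \/ approx_family (/ xi) n f N g C2 c22 0 X ->
    approx_family xi n f N g C c2 K1 X.
Proof.
  intros Hxi Hn HC1 Hc21. destruct (approx_family_inv xi n Hxi Hn) as [c [Hc Hinv]].
  exists (Rmax C1 (c * C2)), (Rmax c21 c22), (Rmax 0 (2 * C2 / Rabs (/ xi) ^ n)).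
  split; [eapply Rle_trans; [exact HC1 | apply Rmax_l]|].
  split; [eapply Rlt_le_trans; [exact Hc21 | apply Rmax_l]|].
  intros X HX [Hfam | Hfam].
  - apply (approx_family_mono xi n f N g C1 _ c21 _ 0); try apply Rmax_l; [lra | exact Hfam].
  - apply (approx_family_mono xi n f N g (c * C2) _ c22 _ (Rmax 0 (2 * C2 / Rabs (/ xi) ^ n)));
      try apply Rmax_r; [lra | right; reflexivity |].
    exact (Hinv f N g C2 c22 0 X ltac:(lra) Hfam).
Qed.

(* Chosen so that [sq_weight (p - 1) * sq_weight (p + 1) = 4 * sq_weight p ^ 2]: a maximizer [p]
   of [|a_i| sq_weight i] then has neighbours with [|a_(p-1) a_(p+1)| <= a_p^2 / 4]. *)
Definition sq_weight (i : nat) : R := 2 ^ (i * i).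

Lemma sq_weight_ge_1 i : 1 <= sq_weight i.
Proof. apply pow_R1_Rle. lra. Qed.

Lemma sq_weight_le i j : (i <= j)%nat -> sq_weight i <= sq_weight j.
Proof. intros. apply Rle_pow; [lra | nia]. Qed.

Lemma sq_weight_neighbors p : (1 <= p)%nat ->
  sq_weight (p - 1) * sq_weight (p + 1) = 4 * (sq_weight p * sq_weight p).
Proof.
  intros Hp. unfold sq_weight. rewrite <- !pow_add.
  replace ((p - 1) * (p - 1) + (p + 1) * (p + 1))%nat with (2 + (p * p + p * p))%nat by nia.
  rewrite pow_add. simpl. ring.
Qed.

Lemma exists_argmax (g : nat -> R) k : exists p, (p <= k)%nat /\ forall i, (i <= k)%nat -> g i <= g p.
Proof.
  induction k as [|k [p [Hp IH]]].
  - exists 0%nat. split; [lia|]. intros i Hi. replace i with 0%nat by lia. lra.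
  - destruct (Rle_lt_dec (g (S k)) (g p)).
    + exists p. split; [lia|]. intros i Hi. destruct (Nat.eq_dec i (S k)) as [->|]; [lra | apply IH; lia].
    + exists (S k). split; [lia|]. intros i Hi. destruct (Nat.eq_dec i (S k)) as [->|]; [lra|].
      specialize (IH i ltac:(lia)). lra.
Qed.

Lemma trunc_neighbors_product_le (a : nat -> Z) k p :
  (forall i, (i <= k)%nat -> Rabs (IZR (a i)) * sq_weight i <= Rabs (IZR (a p)) * sq_weight p) ->
  (1 <= p <= k)%nat ->
  Rabs (IZR (trunc a k (p - 1)) * IZR (trunc a k (p + 1))) <= Rabs (IZR (a p)) * Rabs (IZR (a p)) / 4.
Proof.
  intros Hmax Hp. pose proof (Rabs_pos (IZR (a p))).
  destruct (Nat.le_gt_cases (p + 1) k) as [Hk|Hk].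
  - rewrite !trunc_le, Rabs_mult by lia.
    assert (Hx := Hmax (p - 1)%nat ltac:(lia)). assert (Hy := Hmax (p + 1)%nat ltac:(lia)).
    pose proof (Rabs_pos (IZR (a (p - 1)%nat))). pose proof (Rabs_pos (IZR (a (p + 1)%nat))).
    set (x := Rabs (IZR (a (p - 1)%nat))) in *. set (y := Rabs (IZR (a (p + 1)%nat))) in *.
    set (z := Rabs (IZR (a p))) in *.
    pose proof (sq_weight_ge_1 (p - 1)). pose proof (sq_weight_ge_1 (p + 1)). pose proof (sq_weight_ge_1 p).
    assert (Hxy : x * sq_weight (p - 1) * (y * sq_weight (p + 1)) <= z * sq_weight p * (z * sq_weight p))
      by (apply Rmult_le_compat; try assumption; apply Rmult_le_pos; lra).
    replace (x * sq_weight (p - 1) * (y * sq_weight (p + 1))) with (x * y * (sq_weight (p - 1) * sq_weight (p + 1))) in Hxy by ring.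
    rewrite sq_weight_neighbors in Hxy by lia.
    apply Rmult_le_reg_r with (4 * (sq_weight p * sq_weight p)); [nra|].
    replace (z * z / 4 * (4 * (sq_weight p * sq_weight p))) with (z * sq_weight p * (z * sq_weight p)) by field.
    lra.
  - rewrite (trunc_gt a k (p + 1)), Rmult_0_r, Rabs_R0 by lia. nra.
Qed.

Lemma pair_minor_lower_bound (a : nat -> Z) k p (H : nat) :
  (forall i, (i <= k)%nat -> Rabs (IZR (a i)) * sq_weight i <= Rabs (IZR (a p)) * sq_weight p) ->
  (1 <= p <= k)%nat -> INR H <= Rabs (IZR (a p)) * sq_weight p ->
  INR H ^ 2 <= 2 * (sq_weight k * sq_weight k) *
    Rabs (IZR (trunc a k p * trunc a k p - trunc a k (p - 1) * trunc a k (p + 1))%Z).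
Proof.
  intros Hmax Hp HH.
  pose proof (trunc_neighbors_product_le a k p Hmax Hp) as Hn.
  rewrite minus_IZR, !mult_IZR, (trunc_le a k p) by lia.
  set (z := Rabs (IZR (a p))) in *.
  assert (Hz : IZR (a p) * IZR (a p) = z * z) by (unfold z; rewrite <- Rabs_mult, Rabs_right; [reflexivity | apply Rle_ge; nra]).
  set (v := IZR (trunc a k (p - 1)) * IZR (trunc a k (p + 1))) in *.
  assert (Htr : z * z - Rabs v <= Rabs (IZR (a p) * IZR (a p) - v)).
  { rewrite Hz. rewrite <- (Rabs_right (z * z)) at 1 by (apply Rle_ge; unfold z; nra). apply Rabs_triang_inv. }
  assert (Hwk : sq_weight p <= sq_weight k) by (apply sq_weight_le; lia).
  pose proof (Rabs_pos (IZR (a p))). pose proof (sq_weight_ge_1 p). pose proof (pos_INR H).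
  assert (INR H <= z * sq_weight k) by (unfold z in *; nra).
  assert (INR H ^ 2 <= (z * sq_weight k) * (z * sq_weight k)) by (simpl; rewrite Rmult_1_r; apply Rmult_le_compat; lra).
  assert (0 <= sq_weight k * sq_weight k) by (pose proof (sq_weight_ge_1 k); nra).
  unfold z in *. nra.
Qed.

Lemma approx_family_of_pair xi k w cd c0 :
  0 < cd -> 0 <= c0 ->
  exists C c2, 1 <= C /\ 0 < c2 /\
  forall X a H p, 1 <= X -> (1 <= H)%nat -> INR H <= X -> (1 <= p <= k)%nat ->
    (forall i, (i <= k)%nat -> Rabs (IZR (a i)) <= INR H) ->
    INR H ^ 2 <= c0 * Rabs (IZR (trunc a k p * trunc a k p - trunc a k (p - 1) * trunc a k (p + 1))%Z) ->
    Rabs (zpoly a k xi) <= cd * Rpower X (- w) ->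
    approx_family xi (k + 1) (k - 1) (k + 1 - k + 1) (w - INR (k + 1 - k)) C c2 0 X.
Proof.
  intros Hcd Hc0.
  assert (HCE : 0 <= 2 * c0 * (pow_bound xi (k + 1) + INR k + 2) + 1).
  { pose proof (pow_bound_ge_1 xi (k + 1)). pose proof (pos_INR k).
    assert (0 <= c0 * (pow_bound xi (k + 1) + INR k + 2)) by (apply Rmult_le_pos; lra). lra. }
  destruct (approx_family_of_stable xi (k + 1) k 1 cd _ w (k - 1) (le_n 1) Hcd HCE)
    as [C [c2 [HC [Hc2 Hfam]]]].
  exists C, c2. split; [exact HC | split; [exact Hc2|]].
  intros X a H p HX HH HHX Hp Ha HD Hd.
  apply (Hfam X a H (skip_pair p k)); try assumption.
  - intros i Hi. rewrite Nat.mul_1_l. apply Ha, Hi.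
  - rewrite length_skip_pair; lia.
  - apply stable_recurrence_pair; assumption.
Qed.

Lemma pair_minor_rev_lower_bound (a : nat -> Z) k (H : nat) c0 :
  1 <= c0 -> INR H <= Rabs (IZR (a 0%nat)) ->
  let ra i := a (k - i)%nat in
  INR H ^ 2 <= c0 * Rabs (IZR (trunc ra k k * trunc ra k k - trunc ra k (k - 1) * trunc ra k (k + 1))%Z).
Proof.
  intros Hc0 HH ra.
  rewrite (trunc_gt ra k (k + 1)), (trunc_le ra k k), Z.mul_0_r, Z.sub_0_r by lia.
  unfold ra. rewrite Nat.sub_diag, mult_IZR, Rabs_mult. simpl. rewrite Rmult_1_r.
  pose proof (pos_INR H). pose proof (Rabs_pos (IZR (a 0%nat))).
  assert (INR H * INR H <= Rabs (IZR (a 0%nat)) * Rabs (IZR (a 0%nat))) by (apply Rmult_le_compat; lra).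
  nra.
Qed.

(* Choose [p] maximizing [|a_i| sq_weight i]; if [p = 0], work with the reversed polynomial
   at [1 / xi] instead, for which the constant term becomes the leading one. *)
Lemma small_values_approximable_pair k xi w :
  (2 <= k)%nat -> xi <> 0 -> small_values_approximable false k (k + 1) xi w.
Proof.
  intros Hk Hxi. set (c0 := 2 * (sq_weight k * sq_weight k)).
  assert (Hc0 : 1 <= c0) by (unfold c0; pose proof (sq_weight_ge_1 k); nra).
  assert (Hetk : 0 < Rabs (/ xi) ^ k) by (apply pow_lt, Rabs_pos_lt, Rinv_neq_0_compat, Hxi).
  destruct (approx_family_of_pair xi k w 1 c0 Rlt_0_1 ltac:(lra)) as [C1 [c21 [HC1 [Hc21 Hfam1]]]].
  destruct (approx_family_of_pair (/ xi) k w _ c0 Hetk ltac:(lra)) as [C2 [c22 [HC2 [Hc22 Hfam2]]]].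
  destruct (approx_family_direct_or_inverse xi (k + 1) (k - 1) (k + 1 - k + 1) (w - INR (k + 1 - k)) C1 c21 C2 c22
              Hxi ltac:(lia) HC1 Hc21) as [C [c2 [K1 [HC [Hc2 Hcomb]]]]].
  exists C, c2, K1, 0. split; [exact HC | split; [exact Hc2|]].
  intros X a _ HX [Hp1 [Hp2 [Hp3 _]]]. apply Hcomb; [exact HX|].
  destruct (exists_argmax (fun i => Rabs (IZR (a i))) k) as [i0 [Hi0 Hmax0]].
  destruct (exists_argmax (fun i => Rabs (IZR (a i)) * sq_weight i) k) as [p [Hpk Hmax]].
  destruct (zpoly_coef_neq_0 a k xi ltac:(intros E; rewrite E, Rabs_R0 in Hp1; lra)) as [i1 [Hi1 Hai1]].
  pose proof (Rabs_IZR_ge_1 _ Hai1) as Hai1ge. specialize (Hmax0 i1 Hi1) as Hi0ge. cbn beta in Hi0ge.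
  set (H := Z.abs_nat (a i0)).
  assert (HHR : INR H = Rabs (IZR (a i0))) by apply INR_Zabs_nat.
  assert (HH : (1 <= H)%nat) by (apply INR_le; rewrite HHR; simpl; lra).
  assert (Hall : forall i, (i <= k)%nat -> Rabs (IZR (a i)) <= INR H) by (intros i Hi; rewrite HHR; apply Hmax0, Hi).
  assert (HHX : INR H <= X) by (rewrite HHR; apply Hp3, Hi0).
  assert (HpH : INR H <= Rabs (IZR (a p)) * sq_weight p).
  { rewrite HHR. apply Rle_trans with (Rabs (IZR (a i0)) * sq_weight i0); [|apply Hmax, Hi0].
    pose proof (sq_weight_ge_1 i0). pose proof (Rabs_pos (IZR (a i0))). nra. }
  destruct (Nat.eq_dec p 0) as [->|Hp0].
  - right. apply (Hfam2 X (fun i => a (k - i)%nat) H k HX HH HHX ltac:(lia)).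
    + intros i Hi. apply Hall. lia.
    + apply pair_minor_rev_lower_bound; [exact Hc0|].
      unfold sq_weight in HpH. simpl in HpH. lra.
    + rewrite zpoly_rev, Rabs_mult, <- RPow_abs by exact Hxi.
      apply Rmult_le_compat_l; [apply pow_le, Rabs_pos | exact Hp2].
  - left. apply (Hfam1 X a H p HX HH HHX ltac:(lia) Hall); [|lra].
    apply pair_minor_lower_bound; [exact Hmax | lia | exact HpH].
Qed.

Lemma exists_nat_ge (r : R) : exists B : nat, (1 <= B)%nat /\ r <= INR B.
Proof.
  destruct (archimed (Rmax r 0)) as [Hup _]. pose proof (Rmax_l r 0). pose proof (Rmax_r r 0).
  assert (HupZ : (0 <= up (Rmax r 0))%Z) by (apply le_IZR; lra).
  exists (Z.to_nat (up (Rmax r 0)) + 1)%nat. split; [lia|].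
  rewrite plus_INR, INR_IZR_INZ, Z2Nat.id by exact HupZ. simpl. lra.
Qed.

Lemma quadratic_middle_dominant_large (a : nat -> Z) xi (B : R) :
  xi <> 0 -> 2 * (xi * xi + 1) <= B * Rabs xi ->
  B * Rabs (IZR (a 2%nat)) < Rabs (IZR (a 1%nat)) -> B * Rabs (IZR (a 0%nat)) < Rabs (IZR (a 1%nat)) ->
  Rabs xi / 2 <= Rabs (zpoly a 2 xi).
Proof.
  intros Hxi HB H2 H0.
  pose proof (Rabs_pos_lt xi Hxi). pose proof (Rabs_pos (IZR (a 0%nat))). pose proof (Rabs_pos (IZR (a 2%nat))).
  assert (Hxx : 0 <= xi * xi) by apply Rle_0_sqr.
  assert (HBpos : 0 < B) by nra.
  assert (Hx1 : 1 <= Rabs (IZR (a 1%nat))).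
  { apply Rabs_IZR_ge_1. intros E. rewrite E, Rabs_R0 in H0. nra. }
  set (v := IZR (a 0%nat) + IZR (a 2%nat) * (xi * xi)).
  assert (Hpoly : zpoly a 2 xi = IZR (a 1%nat) * xi + v) by (unfold zpoly, v; simpl; ring).
  assert (Hv : Rabs v <= Rabs (IZR (a 0%nat)) + Rabs (IZR (a 2%nat)) * (xi * xi)).
  { unfold v. eapply Rle_trans; [apply Rabs_triang|]. rewrite Rabs_mult, (Rabs_right (xi * xi)) by lra. lra. }
  assert (Hsmall : B * Rabs v <= Rabs (IZR (a 1%nat)) * (xi * xi + 1)) by nra.
  assert (Hv2 : Rabs v <= Rabs (IZR (a 1%nat)) * Rabs xi / 2).
  { apply Rmult_le_reg_l with B; [exact HBpos|].
    assert (Rabs (IZR (a 1%nat)) * (2 * (xi * xi + 1)) <= Rabs (IZR (a 1%nat)) * (B * Rabs xi))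
      by (apply Rmult_le_compat_l; lra). lra. }
  pose proof (Rabs_triang_inv (IZR (a 1%nat) * xi) (- v)) as Htr.
  rewrite Rabs_Ropp, Rabs_mult in Htr. replace (IZR (a 1%nat) * xi - - v) with (zpoly a 2 xi) in Htr by lra.
  nra.
Qed.

(* For [k = 2] either the leading or the constant coefficient dominates up to the factor [B]
   (use [xi], resp. [1 / xi]), or the middle one does, and then [|P(xi)|] is not small. *)
Lemma small_values_approximable_quadratic n xi w :
  (2 <= n)%nat -> xi <> 0 -> 0 < w -> small_values_approximable false 2 n xi w.
Proof.
  intros Hn Hxi Hw.
  assert (Hax : 0 < Rabs xi) by (apply Rabs_pos_lt, Hxi).
  destruct (exists_nat_ge (2 * (xi * xi + 1) / Rabs xi)) as [B [HB HBr]].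
  assert (HBxi : 2 * (xi * xi + 1) <= INR B * Rabs xi).
  { apply Rmult_le_compat_r with (r := Rabs xi) in HBr; [|lra].
    unfold Rdiv in HBr. rewrite Rmult_assoc, Rinv_l, Rmult_1_r in HBr by lra. exact HBr. }
  assert (Het2 : 0 < Rabs (/ xi) ^ 2) by (apply pow_lt, Rabs_pos_lt, Rinv_neq_0_compat, Hxi).
  destruct (approx_family_of_lead xi 2 n B w 1 ltac:(lia) HB Rlt_0_1) as [C1 [c21 [HC1 [Hc21 Hfam1]]]].
  destruct (approx_family_of_lead (/ xi) 2 n B w _ ltac:(lia) HB Het2) as [C2 [c22 [HC2 [Hc22 Hfam2]]]].
  destruct (approx_family_direct_or_inverse xi n (2 - 1) (n - 2 + 1) (w - INR (n - 2)) C1 c21 C2 c22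
              Hxi ltac:(lia) HC1 Hc21) as [C [c2 [K1 [HC [Hc2 Hcomb]]]]].
  exists C, c2, K1, (Rpower (Rmax (4 / Rabs xi) 1) (/ w)). split; [exact HC | split; [exact Hc2|]].
  intros X a HXt HX [Hp1 [Hp2 [Hp3 _]]]. apply Hcomb; [exact HX|].
  destruct (zpoly_coef_neq_0 a 2 xi ltac:(intros E; rewrite E, Rabs_R0 in Hp1; lra)) as [i1 [Hi1 Hai1]].
  pose proof (Rabs_IZR_ge_1 _ Hai1) as Hai1ge.
  set (x0 := Rabs (IZR (a 0%nat))). set (x1 := Rabs (IZR (a 1%nat))). set (x2 := Rabs (IZR (a 2%nat))).
  assert (Hx : 1 <= x0 \/ 1 <= x1 \/ 1 <= x2) by (destruct i1 as [|[|[|i1]]]; [left | right; left | right; right | lia]; exact Hai1ge).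
  assert (P0 : 0 <= x0) by apply Rabs_pos. assert (P1 : 0 <= x1) by apply Rabs_pos. assert (P2 : 0 <= x2) by apply Rabs_pos.
  assert (HB1 : 1 <= INR B) by (apply (le_INR 1); lia).
  destruct (classic (x1 <= INR B * x2 /\ x0 <= INR B * x2)) as [[S1 S0] | NS2].
  { left. assert (HHR : INR (Z.abs_nat (a 2%nat)) = x2) by apply INR_Zabs_nat.
    apply (Hfam1 X a (Z.abs_nat (a 2%nat)) HX); [| rewrite HHR; apply Hp3; lia | symmetry; exact HHR | | lra].
    - assert (a 2%nat <> 0%Z) by (intros E; unfold x2 in *; rewrite E, Rabs_R0 in *; destruct Hx as [|[|]]; nra). lia.
    - intros i Hi. rewrite mult_INR, HHR. destruct i as [|[|[|i]]]; [exact S0 | exact S1 | change (x2 <= INR B * x2); nra | lia]. }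
  destruct (classic (x1 <= INR B * x0 /\ x2 <= INR B * x0)) as [[S1 S2] | NS0].
  { right. assert (HHR : INR (Z.abs_nat (a 0%nat)) = x0) by apply INR_Zabs_nat.
    apply (Hfam2 X (fun i => a (2 - i)%nat) (Z.abs_nat (a 0%nat)) HX); [| rewrite HHR; apply Hp3; lia | symmetry; exact HHR | |].
    - assert (a 0%nat <> 0%Z) by (intros E; unfold x0 in *; rewrite E, Rabs_R0 in *; destruct Hx as [|[|]]; nra). lia.
    - intros i Hi. rewrite mult_INR, HHR. destruct i as [|[|[|i]]]; [exact S2 | exact S1 | change (x0 <= INR B * x0); nra | lia].
    - rewrite zpoly_rev, Rabs_mult, <- RPow_abs by exact Hxi.
      apply Rmult_le_compat_l; [apply pow_le, Rabs_pos | exact Hp2]. }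
  exfalso.
  assert (Hmid : INR B * x2 < x1 /\ INR B * x0 < x1).
  { destruct (Rle_lt_dec x1 (INR B * x2)); destruct (Rle_lt_dec x0 (INR B * x2));
      destruct (Rle_lt_dec x1 (INR B * x0)); destruct (Rle_lt_dec x2 (INR B * x0)); try tauto; split; nra. }
  pose proof (quadratic_middle_dominant_large a xi (INR B) Hxi HBxi (proj1 Hmid) (proj2 Hmid)).
  assert (Hbig : 4 / Rabs xi <= Rpower X w) by (apply le_Rpower_of_root_le; assumption).
  rewrite Rpower_Ropp in Hp2. apply Rinv_le_contravar in Hbig; [|apply Rdiv_lt_0_compat; lra].
  replace (/ (4 / Rabs xi)) with (Rabs xi / 4) in Hbig by (field; lra). lra.
Qed.

(** * Suprema *)

Lemma lambda_set_nonpos n xi lam : lam <= 0 -> lambda_set n xi lam.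
Proof.
  intros Hl X0. exists (Rmax X0 1). split; [apply Rmax_l|].
  pose proof (Rmax_r X0 1).
  exists (fun m => if Nat.eqb m 0 then 1%Z else Int_part (xi ^ m)). simpl.
  rewrite Rabs_R1. split; [lra | split; [lra|]].
  intros m Hm. destruct (Nat.eqb_spec m 0) as [E|E]; [lia|].
  destruct (base_Int_part (xi ^ m)).
  apply Rle_trans with (Rpower (Rmax X0 1) 0).
  - rewrite Rpower_O, Rmult_1_l by lra. apply Rabs_le. lra.
  - apply Rle_Rpower; lra.
Qed.

Lemma w_set_neg1 lead k xi : xi <> 0 -> w_set lead k xi (-1).
Proof.
  intros Hxi X0. set (X := Rmax (Rmax X0 1) (Rabs (xi ^ k))).
  pose proof (Rmax_l (Rmax X0 1) (Rabs (xi ^ k))). pose proof (Rmax_r (Rmax X0 1) (Rabs (xi ^ k))).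
  pose proof (Rmax_l X0 1). pose proof (Rmax_r X0 1).
  exists X. split; [unfold X in *; lra|].
  exists (fun j => if Nat.eqb j k then 1%Z else 0%Z).
  assert (Hs : sum_f_R0 (fun j => IZR (if Nat.eqb j k then 1%Z else 0%Z) * xi ^ j) k = xi ^ k).
  { rewrite (sum_f_R0_extract _ k k (le_n k)), Nat.eqb_refl, (sum_eq _ (fun _ => 0)), sum_cte; [ring|].
    intros i Hi. destruct (Nat.eqb_spec i k); [reflexivity | ring]. }
  rewrite Hs. replace (- -1) with 1 by ring. rewrite Rpower_1 by (unfold X in *; lra).
  split; [apply Rabs_pos_lt, pow_nonzero, Hxi | split; [unfold X in *; lra | split]].
  - intros j _. destruct (Nat.eqb j k); simpl; rewrite ?Rabs_R1, ?Rabs_R0; unfold X in *; lra.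
  - intros _ j Hj. destruct (Nat.eqb_spec j k); [lia|]. rewrite Nat.eqb_refl, Rabs_R0, Rabs_R1. lra.
Qed.

Lemma Lub_Rbar_ge (E : R -> Prop) (w : R) : E w -> Rbar_le w (Lub_Rbar E).
Proof. intros Hw. apply (proj1 (Lub_Rbar_correct E)), Hw. Qed.

Lemma Lub_Rbar_gt_witness (E : R -> Prop) (r : R) : Rbar_lt r (Lub_Rbar E) -> exists w, E w /\ r < w.
Proof.
  intros Hlt. apply NNPP. intros Hno.
  assert (Hub : is_ub_Rbar E r).
  { intros x Hx. simpl. apply Rnot_lt_le. intros Hrx. apply Hno. exists x. split; assumption. }
  exact (Rbar_lt_not_le _ _ Hlt (proj2 (Lub_Rbar_correct E) _ Hub)).
Qed.

Lemma Rbar_le_Lub_Rbar_of_lt (E : R -> Prop) (r : R) :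
  (forall lam, lam < r -> E lam) -> Rbar_le r (Lub_Rbar E).
Proof.
  intros H. destruct (Lub_Rbar_correct E) as [Hub _].
  destruct (Lub_Rbar E) as [l| |] eqn:El; simpl; [| exact I |].
  - apply Rnot_lt_le. intros Hlr. specialize (Hub ((l + r) / 2) (H ((l + r) / 2) ltac:(lra))). simpl in Hub. lra.
  - exact (Hub (r - 1) (H (r - 1) ltac:(lra))).
Qed.

Lemma rhs_threshold_finite k n lam w0 :
  (2 <= k <= n)%nat -> 0 < lam -> -1 <= w0 ->
  lam < (w0 - INR n + INR k) / ((INR k - 1) * w0 + INR n) ->
  exists ws, ws < w0 /\ forall w, ws < w -> w <= w0 ->
    0 < (INR k - 1) * w + INR n /\ lam * ((INR k - 1) * w + INR n) < w - INR n + INR k.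
Proof.
  intros Hkn Hl Hw0 Hlam.
  assert (Hk : 2 <= INR k) by (apply (le_INR 2); lia).
  assert (Hnk : INR k <= INR n) by (apply le_INR; lia).
  assert (HD : 0 < (INR k - 1) * w0 + INR n) by nra.
  set (G0 := w0 - INR n + INR k - lam * ((INR k - 1) * w0 + INR n)).
  assert (HG0 : 0 < G0).
  { unfold G0. apply Rmult_lt_compat_r with (r := (INR k - 1) * w0 + INR n) in Hlam; [|exact HD].
    unfold Rdiv in Hlam. rewrite Rmult_assoc, Rinv_l in Hlam by lra. lra. }
  assert (Hs : lam * (INR k - 1) <= 1).
  { apply Rnot_lt_le. intros Hs. unfold G0 in HG0. destruct (Rle_lt_dec 0 w0); nra. }
  exists (w0 - G0 / 2). split; [lra|]. intros w Hw Hww0.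
  assert (Hphi : w - INR n + INR k - lam * ((INR k - 1) * w + INR n) = G0 - (1 - lam * (INR k - 1)) * (w0 - w))
    by (unfold G0; ring).
  assert (G0 < w0 - INR n + INR k) by (unfold G0; nra).
  split.
  - assert (Hw' : -1 / 2 < w) by lra.
    assert (- (INR k - 1) / 2 < (INR k - 1) * w) by nra. lra.
  - assert (0 <= lam * (INR k - 1) * (w0 - w)) by (repeat apply Rmult_le_pos; lra). lra.
Qed.

Lemma rhs_threshold_infinite k n lam :
  (2 <= k <= n)%nat -> 0 < lam -> lam < 1 / (INR k - 1) ->
  exists ws, forall w, ws < w ->
    0 < (INR k - 1) * w + INR n /\ lam * ((INR k - 1) * w + INR n) < w - INR n + INR k.
Proof.
  intros Hkn Hl Hlam.
  assert (Hk : 2 <= INR k) by (apply (le_INR 2); lia).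
  assert (Hnk : INR k <= INR n) by (apply le_INR; lia).
  assert (Hs : 0 < 1 - lam * (INR k - 1)).
  { apply Rmult_lt_compat_r with (r := INR k - 1) in Hlam; [|lra].
    unfold Rdiv in Hlam. rewrite Rmult_1_l, Rinv_l in Hlam by lra. lra. }
  set (ws := (INR n - INR k + lam * INR n) / (1 - lam * (INR k - 1))).
  assert (Hws : 0 <= ws) by (unfold ws, Rdiv; apply Rmult_le_pos; [nra | left; apply Rinv_0_lt_compat; lra]).
  exists ws. intros w Hw. split; [nra|].
  assert (Hmul : ws * (1 - lam * (INR k - 1)) < w * (1 - lam * (INR k - 1))) by (apply Rmult_lt_compat_r; lra).
  unfold ws, Rdiv in Hmul. rewrite Rmult_assoc, Rinv_l, Rmult_1_r in Hmul by lra. nra.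
Qed.

Lemma rhs_le_lambda_exp (E : R -> Prop) k n xi :
  (2 <= k <= n)%nat -> E (-1) ->
  (forall w lam, E w -> 0 < lam -> 0 < (INR k - 1) * w + INR n ->
     lam * ((INR k - 1) * w + INR n) < w - INR n + INR k -> lambda_set n xi lam) ->
  Rbar_le (rhs k n (Lub_Rbar E)) (lambda_exp n xi).
Proof.
  intros Hkn HE Hkey. unfold lambda_exp.
  pose proof (Lub_Rbar_ge E (-1) HE) as Hlow.
  assert (Hpick : forall ws : R, Rbar_lt ws (Lub_Rbar E) -> exists w, E w /\ ws < w /\ Rbar_le w (Lub_Rbar E)).
  { intros ws Hws. destruct (Lub_Rbar_gt_witness E ws Hws) as [w [Hw Hlt]].
    exists w. split; [exact Hw | split; [exact Hlt | apply Lub_Rbar_ge, Hw]]. }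
  destruct (Lub_Rbar E) as [w0| |]; simpl in Hlow |- *; [| | contradiction];
    apply Rbar_le_Lub_Rbar_of_lt; intros lam Hlam;
    (destruct (Rle_lt_dec lam 0) as [Hl0|Hl0]; [apply lambda_set_nonpos, Hl0|]).
  - destruct (rhs_threshold_finite k n lam w0 Hkn Hl0 Hlow Hlam) as [ws [Hws Hthr]].
    destruct (Hpick ws Hws) as [w [Hw [Hlt Hle]]].
    destruct (Hthr w Hlt Hle) as [HD Hcond]. exact (Hkey w lam Hw Hl0 HD Hcond).
  - destruct (rhs_threshold_infinite k n lam Hkn Hl0 Hlam) as [ws Hthr].
    destruct (Hpick ws I) as [w [Hw [Hlt _]]].
    destruct (Hthr w Hlt) as [HD Hcond]. exact (Hkey w lam Hw Hl0 HD Hcond).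
Qed.

Theorem theorem3p1 (k n : nat) (xi : R) :
  (2 <= k)%nat -> (k <= n)%nat -> transcendental xi ->
  Rbar_le (rhs k n (w_lead_exp k xi)) (lambda_exp n xi) /\
  ((k = 2%nat \/ n = (k + 1)%nat) ->
     Rbar_le (rhs k n (w_exp k xi)) (lambda_exp n xi)).
Proof.
  intros Hk Hkn Ht. pose proof (transcendental_neq_0 xi Ht) as Hxi. split.
  - apply rhs_le_lambda_exp; [lia | apply w_set_neg1, Hxi|].
    intros w lam Hw Hl HD Hcond.
    apply (lambda_set_of_small_values true k n xi w lam); try assumption; [lia|].
    apply small_values_approximable_lead. lia.
  - intros Hcase. apply rhs_le_lambda_exp; [lia | apply w_set_neg1, Hxi|].
    intros w lam Hw Hl HD Hcond.
    apply (lambda_set_of_small_values false k n xi w lam); try assumption; [lia|].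
    destruct Hcase as [-> | ->].
    + apply small_values_approximable_quadratic; [lia | exact Hxi|].
      assert (0 < lam * ((INR 2 - 1) * w + INR n)) by (apply Rmult_lt_0_compat; assumption).
      assert (2 <= INR n) by (apply (le_INR 2); lia). simpl in *. lra.
    + apply small_values_approximable_pair; [lia | exact Hxi].
Qed.
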